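(* Let $f \in \mathcal{C}^1(\mathbb{R},\mathbb{R})$ be such that $|\!|\!|f|\!|\!| < \infty$, let $\lambda \ge 1$, and let $\kappa \in (0,\frac12)$. Then, for every rough path $(X,\mathbb{X})$ on $S^1$ and every path $(Y,Y')$ controlled by $X$ for which the right-hand side below is finite, the bound $$\Bigl|\int_{S^1} f(\lambda x) Y(x)\,dX(x)\Bigr| \le C\Bigl(\lambda^{\kappa - \frac12} |Y(0)|\, \|X\|_{\frac12-\kappa} + \lambda^{2\kappa-1} \mathscr{K}^\kappa(Y,X)\Bigr)$$ holds uniformly for all $\lambda > 1$, with a constant $C$ depending only on $|\!|\!|f|\!|\!|$ (for the given $\kappa$).
   Context: $S^1$ is identified with $[0,2\pi)$. For $X\colon S^1\to\mathbb{R}$ and $\alpha\in(0,1]$, $\|X\|_\alpha=\sup_{x\ne y}|\delta X(x,y)|/|x-y|^\alpha$ with $\delta X(x,y)=X(y)-X(x)$; $\|X\|_{\mathcal{C}^\alpha}=\|X\|_\alpha+\|X\|_\infty$; for a function $\mathbb{X}$ of two variables, $\|\mathbb{X}\|_\alpha=\sup_{x\neq y}|\mathbb{X}(x,y)|/|x-y|^\alpha$. A (scalar) rough path is a pair $(X,\mathbb{X})$ with $X$ continuous and $\mathbb{X}$ a continuous function of two variables vanishing on the diagonal satisfying $\mathbb{X}(x,z)-\mathbb{X}(x,y)-\mathbb{X}(y,z)=\delta X(x,y)\,\delta X(y,z)$ (with the periodicity convention that two-variable functions on $S^1$ are evaluated with $x\in[0,2\pi)$, $y\in[x,x+2\pi)$).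 A pair $(Y,Y')$ is controlled by $X$ with remainder $R^Y(x,y)=\delta Y(x,y)-Y'(x)\,\delta X(x,y)$. The rough integral $\int Z\,dX$ of a controlled pair $(Z,Z')$ is the limit, as the mesh of the partition $\mathcal{P}$ of the integration interval tends to $0$, of $\sum_{[x,y]\in\mathcal{P}}\bigl(Z(x)\delta X(x,y)+Z'(x)\mathbb{X}(x,y)\bigr)$; here $Z(x)=f(\lambda x)Y(x)$ with derivative process $Z'(x)=f(\lambda x)Y'(x)$. Define $\mathscr{K}^\kappa(Y,X)=\|Y\|_{\frac12-\kappa}\|X\|_{\frac12-\kappa}+\|\mathbb{X}\|_{1-2\kappa}\|Y'\|_{\mathcal{C}^{3\kappa}}+\|R^Y\|_{\frac12+2\kappa}\|X\|_{\frac12-\kappa}$, and for $f\in\mathcal{C}^1$, $|\!|\!|f|\!|\!|=\sum_{n\in\mathbb{Z}}\sqrt{1+|n|}\sup_{0\le t\le1}(|f(n+t)|+|f'(n+t)|)$. *)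

From Stdlib Require Import Reals ZArith.
From Coquelicot Require Import Coquelicot.
Open Scope R_scope.

(* S^1 is identified with [0,2π); functions on S^1 are 2π-periodic functions R -> R. *)
Definition periodic (X : R -> R) : Prop := forall x, X (x + 2 * PI) = X x.

Definition delta (X : R -> R) (x y : R) : R := X y - X x.

(* Domain of two-variable functions on S^1: x ∈ [0,2π), y ∈ [x, x+2π). *)
Definition D2 (p : R * R) : Prop :=
  0 <= fst p < 2 * PI /\ fst p <= snd p < fst p + 2 * PI.

Definition holder (alpha : R) (X : R -> R) : Rbar :=
  Lub_Rbar (fun r => exists x y, 0 <= x < 2 * PI /\ 0 <= y < 2 * PI /\ x <> y /\
               r = Rabs (delta X x y) / Rpower (Rabs (x - y)) alpha).

Definition supnorm (X : R -> R) : Rbar :=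
  Lub_Rbar (fun r => exists x, 0 <= x < 2 * PI /\ r = Rabs (X x)).

Definition Cnorm (alpha : R) (X : R -> R) : Rbar :=
  Rbar_plus (holder alpha X) (supnorm X).

Definition holder2 (alpha : R) (XX : R -> R -> R) : Rbar :=
  Lub_Rbar (fun r => exists x y, D2 (x, y) /\ x <> y /\
               r = Rabs (XX x y) / Rpower (Rabs (x - y)) alpha).

(* (X,𝕏) is a (scalar) rough path on S^1. 𝕏 is a function on S^1 × S^1
   read through the periodicity convention, hence invariant under the
   simultaneous shift by 2π. *)
Definition rough_path (X : R -> R) (XX : R -> R -> R) : Prop :=
  periodic X /\ (forall x, continuous X x) /\
  (forall x y, XX (x + 2 * PI) (y + 2 * PI) = XX x y) /\
  (forall p, D2 p ->
     filterlim (fun q : R * R => XX (fst q) (snd q)) (within D2 (locally p))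
               (locally (XX (fst p) (snd p)))) /\
  (forall x, XX x x = 0) /\
  (forall x y z, x <= y -> y <= z -> z < x + 2 * PI ->
     XX x z - XX x y - XX y z = delta X x y * delta X y z).

Definition remainder (X Y Y' : R -> R) (x y : R) : R :=
  delta Y x y - Y' x * delta X x y.

Fixpoint rsum (g : nat -> R) (n : nat) : R :=
  match n with O => 0 | S m => rsum g m + g m end.

Definition partition_mesh (n : nat) (t : nat -> R) (d : R) : Prop :=
  (1 <= n)%nat /\ t O = 0 /\ t n = 2 * PI /\
  (forall i, (i < n)%nat -> t i < t (S i) /\ t (S i) - t i < d).

Definition is_rough_integral (X : R -> R) (XX : R -> R -> R) (Z Z' : R -> R)
    (I : R) : Prop :=
  forall eps, 0 < eps -> exists d, 0 < d /\
    forall n t, partition_mesh n t d ->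
      Rabs (rsum (fun i => Z (t i) * delta X (t i) (t (S i))
                           + Z' (t i) * XX (t i) (t (S i))) n - I) < eps.

Definition is_C1 (f : R -> R) : Prop :=
  forall x, ex_derive f x /\ continuous (Derive f) x.

Definition loc_sup (f : R -> R) (n : Z) : R :=
  real (Lub_Rbar (fun r => exists t, 0 <= t <= 1 /\
          r = Rabs (f (IZR n + t)) + Rabs (Derive f (IZR n + t)))).

(* |||f||| = Σ_{n∈Z} sqrt(1+|n|) loc_sup f n, as the sup of the symmetric
   partial sums (terms are nonnegative); value in Rbar. *)
Definition triple_norm (f : R -> R) : Rbar :=
  Lub_Rbar (fun s => exists N : nat,
     s = rsum (fun k => let n := (Z.of_nat k - Z.of_nat N)%Z in
                        sqrt (1 + Rabs (IZR n)) * loc_sup f n) (2 * N + 1)).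

Definition Kkappa (kappa : R) (X : R -> R) (XX : R -> R -> R) (Y Y' : R -> R) : R :=
  real (holder (1/2 - kappa) Y) * real (holder (1/2 - kappa) X)
  + real (holder2 (1 - 2 * kappa) XX) * real (Cnorm (3 * kappa) Y')
  + real (holder2 (1/2 + 2 * kappa) (remainder X Y Y')) * real (holder (1/2 - kappa) X).

(* By Chen's relation the germ [Xi s t = Z s * dX(s,t) + Z' s * XX(s,t)] of
   [Z = f(lam .) Y] has defect [Xi s u + Xi u t - Xi s t = R^Z(s,u) dX(u,t) +
   (Z' u - Z' s) XX(u,t)], of order [(t - s)^th] with [th = 1 + min(kappa, 1/2 - kappa) > 1].
   Young's point-removal argument then compares every Riemann sum over [[a, b]] with
   [Xi a b] up to [C_th K (b - a)^th]; this makes the Riemann sums Cauchy.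
   For the bound, [[0, 2 PI]] is cut into the blocks [[j / lam, (j + 1) / lam]], on
   which [f(lam .)] and [f'(lam .)] are bounded by the local sup [A_j] of [f] on
   [[j, j + 1]] and [|Y| <= |Y 0| + |Y|_(1/2-kappa) ((j + 1) / lam)^(1/2-kappa)].
   Each block then contributes [A_j] times [lam^(kappa-1/2)] or [lam^(2kappa-1)], the
   growing factor [(j + 1)^(1/2-kappa) <= sqrt (1 + j)] being absorbed by
   [|||f||| = sum_n sqrt (1 + |n|) A_n]. *)

From Stdlib Require Import Reals Lra Lia List.
From Coquelicot Require Import Coquelicot.
Open Scope R_scope.

Lemma PI2_gt_1 : 1 < 2 * PI.
Proof. pose proof PI2_3_2. lra. Qed.

Lemma Rpower_pos (x y : R) : 0 < Rpower x y.
Proof. apply exp_pos. Qed.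

Lemma Rpower_1_l (y : R) : Rpower 1 y = 1.
Proof. unfold Rpower. rewrite ln_1, Rmult_0_r. apply exp_0. Qed.

(* [ln 0 = 0] by convention, hence this junk value. *)
Lemma Rpower_0_l (y : R) : Rpower 0 y = 1.
Proof.
  unfold Rpower. replace (ln 0) with 0; [rewrite Rmult_0_r; apply exp_0|].
  unfold ln. destruct (Rlt_dec 0 0) as [H|_]; [exfalso; exact (Rlt_irrefl 0 H) | reflexivity].
Qed.

Lemma Rpower_Rinv_l (x y : R) : 0 < x -> Rpower (/ x) y = Rpower x (- y).
Proof. intros Hx. unfold Rpower. rewrite ln_Rinv by exact Hx. f_equal. ring. Qed.

Lemma Rpower_le_self (x e : R) : 0 < x <= 1 -> 1 <= e -> Rpower x e <= x.
Proof.
  intros Hx He. replace e with (1 + (e - 1)) by ring.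
  rewrite Rpower_plus, Rpower_1 by lra.
  pose proof (Rle_Rpower_l x 1 (e - 1) ltac:(lra) Hx) as H. rewrite Rpower_1_l in H.
  pose proof (Rpower_pos x (e - 1)). nra.
Qed.

Lemma Rpower_split_le (x l th e : R) : 0 < x <= l -> th <= e ->
  Rpower x e <= Rpower x th * Rpower l (e - th).
Proof.
  intros Hx He. replace e with (th + (e - th)) at 1 by ring. rewrite Rpower_plus.
  apply Rmult_le_compat_l; [left; apply Rpower_pos|].
  apply Rle_Rpower_l; lra.
Qed.

Lemma Rpower_le_rescale (h l th e : R) : 0 < h <= l -> th <= e ->
  Rpower h e <= Rpower l e / Rpower l th * Rpower h th.
Proof.
  intros Hh He. eapply Rle_trans; [apply (Rpower_split_le h l th e Hh He)|].
  replace (Rpower l e) with (Rpower l (e - th) * Rpower l th)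
    by (rewrite <- Rpower_plus; f_equal; ring).
  pose proof (Rpower_pos l th). right. field. lra.
Qed.

Lemma Rpower_mult_le_plus (a b p q : R) : 0 < a -> 0 < b -> 0 <= p -> 0 <= q ->
  Rpower a p * Rpower b q <= Rpower (a + b) (p + q).
Proof.
  intros Ha Hb Hp Hq. rewrite Rpower_plus.
  apply Rmult_le_compat; try (left; apply Rpower_pos); apply Rle_Rpower_l; lra.
Qed.

Lemma Rpower_mult_le_adjacent (s u t a b c : R) : s < u -> u < t -> 0 <= a -> 0 <= b ->
  a + b = c -> Rpower (u - s) a * Rpower (t - u) b <= Rpower (t - s) c.
Proof.
  intros Hsu Hut Ha Hb <-. replace (t - s) with ((u - s) + (t - u)) by ring.
  apply Rpower_mult_le_plus; lra.
Qed.

Lemma ln_le_minus_1 (y : R) : 0 < y -> ln y <= y - 1.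
Proof. intros Hy. pose proof (exp_ineq1_le (ln y)). rewrite exp_ln in H; lra. Qed.

(* Convexity of [x ^ (-q)] on [[j - 1, j]]. *)
Lemma Rpower_decrement_ge (q j : R) : 0 < q -> 1 < j ->
  q * Rpower j (- (q + 1)) <= Rpower (j - 1) (- q) - Rpower j (- q).
Proof.
  intros Hq Hj. unfold Rpower.
  set (L := ln j). set (L1 := ln (j - 1)).
  assert (E1 : exp (- (q + 1) * L) = exp (- q * L) * / j).
  { replace (- (q + 1) * L) with (- q * L + - L) by ring. rewrite exp_plus.
    unfold L. rewrite <- ln_Rinv, exp_ln by (try apply Rinv_0_lt_compat; lra). ring. }
  assert (E2 : exp (- q * L1) = exp (- q * L) * exp (q * (L - L1))).
  { rewrite <- exp_plus. f_equal. ring. }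
  assert (HL : / j <= L - L1).
  { assert (Hpos : 0 < (j - 1) * / j) by (apply Rmult_lt_0_compat; [lra | apply Rinv_0_lt_compat; lra]).
    pose proof (ln_le_minus_1 _ Hpos) as H.
    rewrite ln_mult, ln_Rinv in H by (try apply Rinv_0_lt_compat; lra).
    replace ((j - 1) * / j - 1) with (- / j) in H by (field; lra). unfold L, L1. lra. }
  rewrite E1, E2.
  pose proof (exp_ineq1_le (q * (L - L1))). pose proof (exp_pos (- q * L)).
  assert (q * / j <= q * (L - L1)) by (apply Rmult_le_compat_l; lra).
  nra.
Qed.

Lemma Rpower_INR_eventually_lt (q e : R) : 0 < q -> 0 < e ->
  exists N, forall M, (N <= M)%nat -> (1 <= M)%nat -> Rpower (INR M) (- q) < e.
Proof.
  intros Hq He. destruct (INR_unbounded (exp (- ln e / q))) as [N HN].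
  exists N. intros M HNM HM.
  assert (HMN : INR N <= INR M) by (apply le_INR; exact HNM).
  assert (HM0 : 0 < INR M) by (apply lt_0_INR; lia).
  unfold Rpower. rewrite <- (exp_ln e) by exact He. apply exp_increasing.
  assert (H : - ln e / q < ln (INR M)).
  { rewrite <- (ln_exp (- ln e / q)). apply ln_increasing; [apply exp_pos | lra]. }
  apply Rmult_lt_reg_r with (/ q); [apply Rinv_0_lt_compat; exact Hq|].
  replace (- q * ln (INR M) * / q) with (- ln (INR M)) by (field; lra).
  unfold Rdiv in H. lra.
Qed.

Lemma Rabs_sub_triang (a b c : R) : Rabs (a - c) <= Rabs (a - b) + Rabs (b - c).
Proof. replace (a - c) with ((a - b) + (b - c)) by ring. apply Rabs_triang. Qed.

Lemma Rabs_mult_le (a b a' b' : R) : Rabs a <= a' -> Rabs b <= b' -> Rabs (a * b) <= a' * b'.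
Proof. intros. rewrite Rabs_mult. apply Rmult_le_compat; auto; apply Rabs_pos. Qed.

Lemma rsum_shift (g : nat -> R) (n : nat) : rsum g (S n) = g O + rsum (fun i => g (S i)) n.
Proof. induction n as [|n IH]; simpl in *; [ring|]. rewrite IH. ring. Qed.

Lemma rsum_ext (g h : nat -> R) (n : nat) :
  (forall i, (i < n)%nat -> g i = h i) -> rsum g n = rsum h n.
Proof.
  induction n as [|n IH]; intros H; simpl; [reflexivity|].
  rewrite IH, H by (try intros; try apply H; lia). reflexivity.
Qed.

Lemma rsum_app (g : nat -> R) (a b : nat) :
  rsum g (a + b) = rsum g a + rsum (fun i => g (a + i)%nat) b.
Proof.
  induction b as [|b IH]; simpl; [rewrite Nat.add_0_r; ring|].
  rewrite Nat.add_succ_r. simpl. rewrite IH. ring.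
Qed.

Lemma rsum_le (g h : nat -> R) (n : nat) :
  (forall i, (i < n)%nat -> g i <= h i) -> rsum g n <= rsum h n.
Proof.
  induction n as [|n IH]; intros H; simpl; [lra|].
  apply Rplus_le_compat; [apply IH; intros; apply H|apply H]; lia.
Qed.

Lemma rsum_plus (g h : nat -> R) (n : nat) :
  rsum (fun i => g i + h i) n = rsum g n + rsum h n.
Proof. induction n as [|n IH]; simpl; [ring|]. rewrite IH. ring. Qed.

Lemma rsum_scal_l (c : R) (g : nat -> R) (n : nat) :
  rsum (fun i => c * g i) n = c * rsum g n.
Proof. induction n as [|n IH]; simpl; [ring|]. rewrite IH. ring. Qed.

Lemma rsum_const (c : R) (n : nat) : rsum (fun _ => c) n = INR n * c.
Proof. induction n as [|n IH]; simpl rsum; [simpl; ring|]. rewrite IH, S_INR. ring. Qed.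

Lemma rsum_nonneg (g : nat -> R) (n : nat) :
  (forall i, (i < n)%nat -> 0 <= g i) -> 0 <= rsum g n.
Proof.
  intros H. replace 0 with (rsum (fun _ => 0) n) by (rewrite rsum_const; ring).
  apply rsum_le. exact H.
Qed.

Lemma rsum_Rabs_le (g : nat -> R) (n : nat) : Rabs (rsum g n) <= rsum (fun i => Rabs (g i)) n.
Proof.
  induction n as [|n IH]; simpl; [rewrite Rabs_R0; lra|].
  eapply Rle_trans; [apply Rabs_triang|]. lra.
Qed.

(** * Young's maximal inequality for chains *)

(* A chain [a < x1 < ... < xn = b] is stored as the list [x1; ...; xn] of the
   points after [a]; the empty list is the trivial chain [a = b]. *)
Fixpoint chain (a : R) (l : list R) (b : R) : Prop :=
  match l with nil => a = b | x :: l' => a < x /\ chain x l' b end.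

Fixpoint chain_mesh_le (d a : R) (l : list R) : Prop :=
  match l with nil => True | x :: l' => x - a <= d /\ chain_mesh_le d x l' end.

Fixpoint chain_sum (Xi : R -> R -> R) (a : R) (l : list R) : R :=
  match l with nil => 0 | x :: l' => Xi a x + chain_sum Xi x l' end.

Definition defect (Xi : R -> R -> R) (s u t : R) : R := Xi s u + Xi u t - Xi s t.

Lemma chain_le (l : list R) (a b : R) : chain a l b -> a <= b.
Proof.
  revert a. induction l as [|x l IH]; simpl; intros a H; [lra|].
  destruct H as [H1 H2]. specialize (IH _ H2). lra.
Qed.

Lemma chain_refl_nil (l : list R) (a : R) : chain a l a -> l = nil.
Proof.
  destruct l as [|x l]; simpl; intros H; [reflexivity|].
  destruct H as [H1 H2]. apply chain_le in H2. lra.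
Qed.

(* Young's point removal: among [m] segments of [[a, b]] two adjacent ones have
   joint length at most [2 (b - a) / (m - 1)], and dropping their common point
   changes the sum by one defect.  The hypothesis on [c] is the form of this
   bound that survives the induction. *)
Lemma chain_sum_remove_point (Xi : R -> R -> R) (l : list R) : forall m a x b c,
  length (x :: l) = m -> (2 <= m)%nat -> chain a (x :: l) b ->
  (b - x) + (b - a) <= INR (m - 1) * c ->
  exists l' p q r, length l' = (m - 1)%nat /\ chain a l' b /\
    a <= p /\ p < q /\ q < r /\ r <= b /\ r - p <= c /\
    chain_sum Xi a (x :: l) = chain_sum Xi a l' + defect Xi p q r.
Proof.
  induction l as [|y l IH]; intros m a x b c Hlen Hm Hch Hc; [simpl in Hlen; lia|].
  destruct Hch as [Hax [Hxy Hch]].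
  assert (Hyb : y <= b) by (eapply chain_le; eauto).
  destruct (Rle_dec (y - a) c) as [Hle|Hgt].
  - exists (y :: l), a, x, y. simpl in Hlen |- *.
    repeat split; try lra; try lia; auto. unfold defect. ring.
  - destruct l as [|z l].
    { simpl in Hlen, Hch. subst m y. simpl in Hc. lra. }
    assert (Hm1 : INR (m - 1) = INR (m - 1 - 1) + 1).
    { rewrite <- S_INR. f_equal. simpl in Hlen; lia. }
    destruct (IH (m - 1)%nat x y b c) as [l' [p [q [r H]]]];
      [simpl in *; lia | simpl in *; lia | exact (conj Hxy Hch) | nra |].
    destruct H as [H1 [H2 [H3 [H4 [H5 [H6 [H7 H8]]]]]]].
    exists (x :: l'), p, q, r. simpl in Hlen, H1 |- *.
    repeat split; try lra; try lia; auto.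
    simpl in H8. rewrite H8. ring.
Qed.

(* Integral comparison: [zeta_majorant th m] dominates [sum_(k=1)^(m-1) k^(-th)]. *)
Definition zeta_majorant (th : R) (m : nat) : R :=
  match m with
  | O | S O => 0
  | _ => 1 + (1 - Rpower (INR (m - 1)) (- (th - 1))) / (th - 1)
  end.

Lemma zeta_majorant_step (th : R) (m : nat) : 1 < th -> (1 <= m)%nat ->
  zeta_majorant th m + Rpower (INR m) (- th) <= zeta_majorant th (S m).
Proof.
  intros Hth Hm. destruct m as [|[|m]]; [lia| |].
  - simpl. rewrite !Rpower_1_l. unfold Rdiv. lra.
  - unfold zeta_majorant.
    replace (S (S (S m)) - 1)%nat with (S (S m)) by lia.
    replace (S (S m) - 1)%nat with (S m) by lia.
    pose proof (Rpower_decrement_ge (th - 1) (INR (S (S m)))) as H.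
    replace (INR (S (S m)) - 1) with (INR (S m)) in H by (rewrite (S_INR (S m)); ring).
    replace (- (th - 1 + 1)) with (- th) in H by ring.
    assert (1 < INR (S (S m))) by (rewrite !S_INR; pose proof (pos_INR m); lra).
    specialize (H ltac:(lra) ltac:(lra)).
    set (P := Rpower (INR (S m)) (- (th - 1))) in *.
    set (Q := Rpower (INR (S (S m))) (- (th - 1))) in *.
    assert (Rpower (INR (S (S m))) (- th) <= (P - Q) / (th - 1)).
    { apply Rmult_le_reg_l with (th - 1); [lra|].
      replace ((th - 1) * ((P - Q) / (th - 1))) with (P - Q) by (field; lra). lra. }
    replace ((1 - Q) / (th - 1)) with ((1 - P) / (th - 1) + (P - Q) / (th - 1))
      by (field; lra).
    lra.
Qed.

Lemma zeta_majorant_le (th : R) (m : nat) : 1 < th -> zeta_majorant th m <= 1 + / (th - 1).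
Proof.
  intros Hth. assert (0 < / (th - 1)) by (apply Rinv_0_lt_compat; lra).
  destruct m as [|[|m]]; unfold zeta_majorant; try lra.
  set (P := Rpower (INR (S (S m) - 1)) (- (th - 1))).
  assert (0 <= P * / (th - 1)) by (apply Rmult_le_pos; [left; apply Rpower_pos | lra]).
  unfold Rdiv. rewrite Rmult_minus_distr_r, Rmult_1_l. lra.
Qed.

Definition sewing_const (th : R) : R := Rpower 2 th * (1 + / (th - 1)).

Lemma sewing_const_nonneg (th : R) : 1 < th -> 0 <= sewing_const th.
Proof.
  intros Hth. unfold sewing_const. assert (0 < / (th - 1)) by (apply Rinv_0_lt_compat; lra).
  apply Rmult_le_pos; [left; apply Rpower_pos | lra].
Qed.

Section Young.

Variables (Xi : R -> R -> R) (th K a b : R).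
Hypotheses (Hth : 1 < th) (HK : 0 <= K) (Hab : a < b).
Hypothesis defect_le : forall s u t, a <= s -> s < u -> u < t -> t <= b ->
  Rabs (defect Xi s u t) <= K * Rpower (t - s) th.

Lemma chain_sum_sub_le_length (m : nat) (l : list R) : length l = S m -> chain a l b ->
  Rabs (chain_sum Xi a l - Xi a b) <= K * Rpower (2 * (b - a)) th * zeta_majorant th (S m).
Proof.
  revert l. induction m as [|m IH]; intros l Hlen Hch.
  - destruct l as [|x [|y l]]; simpl in Hlen; try lia.
    destruct Hch as [_ Hx]. simpl in Hx |- *. subst x.
    replace (Xi a b + 0 - Xi a b) with 0 by ring. rewrite Rabs_R0. lra.
  - destruct l as [|x l]; [simpl in Hlen; lia|].
    assert (HSm : 0 < INR (S m)) by (apply lt_0_INR; lia).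
    assert (Hxb : x <= b) by (destruct Hch as [_ H]; eapply chain_le; eauto).
    destruct (chain_sum_remove_point Xi l (S (S m)) a x b (2 * (b - a) / INR (S m)))
      as [l' [p [q [r [H1 [H2 [H3 [H4 [H5 [H6 [H7 H8]]]]]]]]]]]; auto; [lia| |].
    { replace (S (S m) - 1)%nat with (S m) by lia.
      replace (INR (S m) * (2 * (b - a) / INR (S m))) with (2 * (b - a)) by (field; lra).
      simpl in Hch. lra. }
    replace (S (S m) - 1)%nat with (S m) in H1 by lia.
    specialize (IH l' H1 H2).
    assert (Hd : Rabs (defect Xi p q r) <= K * Rpower (2 * (b - a)) th * Rpower (INR (S m)) (- th)).
    { eapply Rle_trans; [apply defect_le; lra|].
      rewrite Rmult_assoc. apply Rmult_le_compat_l; [exact HK|].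
      rewrite <- Rpower_Rinv_l, Rpower_mult_distr by (try apply Rinv_0_lt_compat; lra).
      apply Rle_Rpower_l; lra. }
    pose proof (zeta_majorant_step th (S m) Hth ltac:(lia)).
    assert (0 <= K * Rpower (2 * (b - a)) th) by (apply Rmult_le_pos; [exact HK | left; apply Rpower_pos]).
    rewrite H8.
    replace (chain_sum Xi a l' + defect Xi p q r - Xi a b)
      with ((chain_sum Xi a l' - Xi a b) + defect Xi p q r) by ring.
    eapply Rle_trans; [apply Rabs_triang|]. nra.
Qed.

Lemma chain_sum_sub_le (l : list R) : chain a l b ->
  Rabs (chain_sum Xi a l - Xi a b) <= sewing_const th * K * Rpower (b - a) th.
Proof.
  intros Hch. destruct l as [|x l]; [simpl in Hch; lra|].
  eapply Rle_trans; [apply (chain_sum_sub_le_length (length l)); auto|].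
  unfold sewing_const. rewrite <- Rpower_mult_distr by lra.
  pose proof (zeta_majorant_le th (S (length l)) Hth).
  assert (0 <= K * (Rpower 2 th * Rpower (b - a) th))
    by (apply Rmult_le_pos; [exact HK | apply Rmult_le_pos; left; apply Rpower_pos]).
  replace (Rpower 2 th * (1 + / (th - 1)) * K * Rpower (b - a) th)
    with (K * (Rpower 2 th * Rpower (b - a) th) * (1 + / (th - 1))) by ring.
  apply Rmult_le_compat_l; assumption.
Qed.

End Young.

Lemma chain_split (Xi : R -> R -> R) (d : R) (l : list R) : forall a b p,
  chain a l b -> chain_mesh_le d a l -> a < p -> p < b ->
  exists l1 l2 e, chain a l1 p /\ chain p l2 b /\ chain_mesh_le d p l2 /\
    chain_sum Xi a l = chain_sum Xi a l1 + chain_sum Xi p l2 + e /\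
    (e = 0 \/ exists s t, a <= s /\ s < p /\ p < t /\ t <= b /\ t - s <= d /\
                         e = - defect Xi s p t).
Proof.
  induction l as [|x l IH]; intros a b p Hch Hmesh Hap Hpb; [simpl in Hch; lra|].
  destruct Hch as [Hax Hch], Hmesh as [Hd Hmesh].
  assert (Hxb : x <= b) by (eapply chain_le; eauto).
  destruct (Rtotal_order x p) as [Hxp|[Hxp|Hxp]].
  - destruct (IH x b p Hch Hmesh Hxp Hpb) as [l1 [l2 [e [H1 [H2 [H3 [H4 H5]]]]]]].
    exists (x :: l1), l2, e. simpl. rewrite H4.
    split; [tauto|]. do 2 (split; [assumption|]). split; [ring|].
    destruct H5 as [H5|[s [t H5]]]; [left; exact H5 | right; exists s, t; intuition lra].
  - subst x. exists (p :: nil), l, 0. simpl. repeat split; auto. ring.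
  - exists (p :: nil), (x :: l), (Xi a x - Xi a p - Xi p x). simpl.
    split; [tauto|]. split; [tauto|]. split; [split; [lra | assumption]|]. split; [ring|].
    right. exists a, x. unfold defect. repeat split; try lra.
Qed.

Lemma increasing_lt_0 (c : nat -> R) (n : nat) : (forall i, (i < n)%nat -> c i < c (S i)) ->
  forall j, (1 <= j <= n)%nat -> c O < c j.
Proof.
  intros Hc j Hj. induction j as [|j IH]; [lia|].
  destruct j as [|j]; [apply Hc; lia|].
  eapply Rlt_trans; [apply IH; lia | apply Hc; lia].
Qed.

(* Comparison of a fine chain with the coarse sum over block points [c i]:
   every block contributes its Young error [E i], every block point met
   strictly inside a segment of the chain one small defect [eta]. *)
Lemma chain_sum_blocks (Xi : R -> R -> R) (d eta : R) : 0 <= eta ->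
  forall (M : nat) (c E : nat -> R) (l : list R),
  (forall i, (i < M)%nat -> c i < c (S i)) ->
  (forall i, (i < M)%nat -> forall l', chain (c i) l' (c (S i)) ->
      Rabs (chain_sum Xi (c i) l' - Xi (c i) (c (S i))) <= E i) ->
  (forall s u t, c O <= s -> s < u -> u < t -> t <= c M -> t - s <= d ->
      Rabs (defect Xi s u t) <= eta) ->
  chain (c O) l (c M) -> chain_mesh_le d (c O) l ->
  Rabs (chain_sum Xi (c O) l - rsum (fun i => Xi (c i) (c (S i))) M)
    <= INR M * eta + rsum E M.
Proof.
  intros Heta M. induction M as [|M IH]; intros c E l Hc HE Hdef Hch Hmesh.
  - apply chain_refl_nil in Hch. subst l. simpl. rewrite Rminus_0_r, Rabs_R0. lra.
  - destruct M as [|M].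
    + specialize (HE O ltac:(lia) l Hch). simpl. rewrite !Rplus_0_l. lra.
    + assert (Hc1 : c O < c 1%nat) by (apply Hc; lia).
      assert (Hc2 : c 1%nat < c (S (S M)))
        by (apply (increasing_lt_0 (fun i => c (S i)) (S M)); [intros; apply Hc|]; lia).
      destruct (chain_split Xi d l (c O) (c (S (S M))) (c 1%nat) Hch Hmesh Hc1 Hc2)
        as [l1 [l2 [e [H1 [H2 [H3 [H4 H5]]]]]]].
      assert (IH' := IH (fun i => c (S i)) (fun i => E (S i)) l2).
      cbv beta in IH'.
      specialize (IH' ltac:(intros; apply Hc; lia) ltac:(intros; apply HE; [lia | assumption])).
      specialize (IH' ltac:(intros; apply Hdef; lra) H2 H3).
      assert (He : Rabs e <= eta).
      { destruct H5 as [->|[s [t [? [? [? [? [? ->]]]]]]]]; [rewrite Rabs_R0; exact Heta|].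
        rewrite Rabs_Ropp. apply Hdef; lra. }
      specialize (HE O ltac:(lia) l1 H1).
      rewrite H4, (rsum_shift _ (S M)), (rsum_shift E (S M)), (S_INR (S M)).
      set (A := chain_sum Xi (c O) l1) in *. set (B := chain_sum Xi (c 1%nat) l2) in *.
      set (C := rsum (fun i => Xi (c (S i)) (c (S (S i)))) (S M)) in *.
      replace (A + B + e - (Xi (c O) (c 1%nat) + C))
        with ((A - Xi (c O) (c 1%nat)) + (B - C) + e) by ring.
      pose proof (Rabs_triang (A - Xi (c O) (c 1%nat) + (B - C)) e).
      pose proof (Rabs_triang (A - Xi (c O) (c 1%nat)) (B - C)).
      lra.
Qed.

Lemma chain_sum_Rabs_le_block_terms (Xi : R -> R -> R) (d eta : R) (M : nat) (c E : nat -> R)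
    (l : list R) : 0 <= eta ->
  (forall i, (i < M)%nat -> c i < c (S i)) ->
  (forall i, (i < M)%nat -> forall l', chain (c i) l' (c (S i)) ->
      Rabs (chain_sum Xi (c i) l' - Xi (c i) (c (S i))) <= E i) ->
  (forall s u t, c O <= s -> s < u -> u < t -> t <= c M -> t - s <= d ->
      Rabs (defect Xi s u t) <= eta) ->
  chain (c O) l (c M) -> chain_mesh_le d (c O) l ->
  Rabs (chain_sum Xi (c O) l) <= rsum (fun i => Rabs (Xi (c i) (c (S i))) + E i) M + INR M * eta.
Proof.
  intros Heta Hc HE Hdef Hch Hmesh.
  pose proof (chain_sum_blocks Xi d eta Heta M c E l Hc HE Hdef Hch Hmesh) as H.
  pose proof (rsum_Rabs_le (fun i => Xi (c i) (c (S i))) M).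
  rewrite rsum_plus.
  replace (chain_sum Xi (c O) l) with
    ((chain_sum Xi (c O) l - rsum (fun i => Xi (c i) (c (S i))) M)
     + rsum (fun i => Xi (c i) (c (S i))) M) by ring.
  pose proof (Rabs_triang (chain_sum Xi (c O) l - rsum (fun i => Xi (c i) (c (S i))) M)
                          (rsum (fun i => Xi (c i) (c (S i))) M)).
  lra.
Qed.

(** * Existence of the sewing limit *)

Definition partition_sum (Xi : R -> R -> R) (n : nat) (t : nat -> R) : R :=
  rsum (fun i => Xi (t i) (t (S i))) n.

Definition is_sewing_limit (Xi : R -> R -> R) (I : R) : Prop :=
  forall eps, 0 < eps -> exists d, 0 < d /\
    forall n t, partition_mesh n t d -> Rabs (partition_sum Xi n t - I) < eps.

Lemma partition_chain (Xi : R -> R -> R) (n : nat) : forall t : nat -> R,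
  (forall i, (i < n)%nat -> t i < t (S i)) ->
  chain (t O) (map t (seq 1 n)) (t n) /\
  chain_sum Xi (t O) (map t (seq 1 n)) = partition_sum Xi n t.
Proof.
  unfold partition_sum. induction n as [|n IH]; intros t Ht; [simpl; auto|].
  change (map t (seq 1 (S n))) with (t 1%nat :: map t (seq 2 n)).
  rewrite <- seq_shift, map_map.
  destruct (IH (fun i => t (S i))) as [H1 H2]; [intros; apply Ht; lia|].
  rewrite rsum_shift. simpl. rewrite H2. split; [split; [apply Ht; lia | exact H1] | reflexivity].
Qed.

Lemma partition_chain_mesh (d : R) (n : nat) : forall t : nat -> R,
  (forall i, (i < n)%nat -> t (S i) - t i <= d) ->
  chain_mesh_le d (t O) (map t (seq 1 n)).
Proof.
  induction n as [|n IH]; intros t Ht; simpl; [exact I|].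
  rewrite <- seq_shift, map_map.
  split; [apply Ht; lia | apply (IH (fun i => t (S i))); intros; apply Ht; lia].
Qed.

Lemma partition_mesh_chain (Xi : R -> R -> R) (n : nat) (t : nat -> R) (d : R) :
  partition_mesh n t d ->
  chain 0 (map t (seq 1 n)) (2 * PI) /\ chain_mesh_le d 0 (map t (seq 1 n)) /\
  chain_sum Xi 0 (map t (seq 1 n)) = partition_sum Xi n t.
Proof.
  intros [_ [H0 [Hn Ht]]].
  destruct (partition_chain Xi n t) as [H1 H2]; [intros i Hi; apply Ht, Hi|].
  rewrite H0, Hn in H1. rewrite H0 in H2.
  split; [exact H1|]. split; [|exact H2].
  rewrite <- H0. apply partition_chain_mesh. intros i Hi. destruct (Ht i Hi). lra.
Qed.

Lemma partition_mesh_mono (n : nat) (t : nat -> R) (d d' : R) :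
  partition_mesh n t d -> d <= d' -> partition_mesh n t d'.
Proof.
  intros [Hn [H0 [H1 Ht]]] Hd. do 3 (split; [assumption|]).
  intros i Hi. destruct (Ht i Hi). split; lra.
Qed.

Definition uniform_partition (M : nat) (i : nat) : R := INR i * (2 * PI / INR M).

Lemma uniform_partition_0 (M : nat) : uniform_partition M O = 0.
Proof. unfold uniform_partition. simpl. ring. Qed.

Lemma uniform_partition_last (M : nat) : (1 <= M)%nat -> uniform_partition M M = 2 * PI.
Proof. intros HM. unfold uniform_partition. field. apply not_0_INR. lia. Qed.

Lemma uniform_partition_S (M i : nat) :
  uniform_partition M (S i) = uniform_partition M i + 2 * PI / INR M.
Proof. unfold uniform_partition. rewrite S_INR. ring. Qed.

Lemma uniform_partition_range (M i : nat) : (1 <= M)%nat -> (i <= M)%nat ->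
  0 <= uniform_partition M i <= 2 * PI.
Proof.
  intros HM Hi. rewrite <- (uniform_partition_last M HM). unfold uniform_partition.
  assert (0 <= 2 * PI / INR M) by (apply Rmult_le_pos; [pose proof PI_RGT_0; lra |
    left; apply Rinv_0_lt_compat, lt_0_INR; lia]).
  split; [apply Rmult_le_pos; [apply pos_INR | lra]|].
  apply Rmult_le_compat_r; [lra | apply le_INR, Hi].
Qed.

Lemma uniform_partition_mesh (M : nat) (d : R) : (1 <= M)%nat -> 2 * PI / INR M < d ->
  partition_mesh M (uniform_partition M) d.
Proof.
  intros HM Hd. assert (0 < INR M) by (apply lt_0_INR; lia).
  assert (0 < 2 * PI / INR M) by (apply Rdiv_lt_0_compat; [apply Rgt_2PI_0 | lra]).
  unfold uniform_partition. repeat split; auto.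
  - simpl. ring.
  - field. lra.
  - rewrite S_INR. lra.
  - rewrite S_INR. lra.
Qed.

Lemma uniform_partition_mesh_eventually (d : R) : 0 < d ->
  exists N, forall k, (N <= k)%nat -> partition_mesh (S k) (uniform_partition (S k)) d.
Proof.
  intros Hd. destruct (INR_unbounded (2 * PI / d)) as [N HN].
  exists N. intros k Hk. apply uniform_partition_mesh; [lia|].
  assert (HNk : INR N <= INR (S k)) by (apply le_INR; lia).
  assert (0 < INR (S k)) by (apply lt_0_INR; lia).
  apply Rmult_lt_reg_r with (INR (S k) / d); [apply Rdiv_lt_0_compat; lra|].
  replace (2 * PI / INR (S k) * (INR (S k) / d)) with (2 * PI / d) by (field; lra).
  replace (d * (INR (S k) / d)) with (INR (S k)) by (field; lra). lra.
Qed.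

Section SewingLimit.

Variables (Xi : R -> R -> R) (th K : R).
Hypotheses (Hth : 1 < th) (HK : 0 <= K).
Hypothesis defect_le : forall s u t, 0 <= s -> s < u -> u < t -> t <= 2 * PI -> t - s <= 1 ->
  Rabs (defect Xi s u t) <= K * Rpower (t - s) th.

Definition young_error (M : nat) : R :=
  INR M * (sewing_const th * K * Rpower (2 * PI / INR M) th).

(* [8 <= M] makes the uniform step [2 PI / M] at most [1]. *)
Lemma chain_sum_near_uniform (M : nat) (d : R) (l : list R) :
  (8 <= M)%nat -> 0 < d <= 1 -> chain 0 l (2 * PI) -> chain_mesh_le d 0 l ->
  Rabs (chain_sum Xi 0 l - partition_sum Xi M (uniform_partition M))
    <= INR M * (K * d) + young_error M.
Proof.
  intros HM Hd Hch Hmesh.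
  assert (HM0 : 8 <= INR M) by (replace 8 with (INR 8) by (simpl; ring); apply le_INR, HM).
  assert (Hstep : 0 < 2 * PI / INR M <= 1).
  { pose proof PI_4. pose proof PI_RGT_0. split; [apply Rdiv_lt_0_compat; lra|].
    apply Rmult_le_reg_r with (INR M); [lra|].
    replace (2 * PI / INR M * INR M) with (2 * PI) by (field; lra). lra. }
  unfold young_error, partition_sum.
  rewrite <- (rsum_const (sewing_const th * K * Rpower (2 * PI / INR M) th) M).
  rewrite <- (uniform_partition_0 M) in Hch, Hmesh |- *.
  rewrite <- (uniform_partition_last M) in Hch by lia.
  apply (chain_sum_blocks Xi d); try assumption.
  - apply Rmult_le_pos; lra.
  - intros i _. rewrite uniform_partition_S. lra.
  - intros i Hi l' Hl'.
    pose proof (uniform_partition_range M i ltac:(lia) ltac:(lia)).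
    pose proof (uniform_partition_range M (S i) ltac:(lia) ltac:(lia)).
    pose proof (uniform_partition_S M i).
    replace (2 * PI / INR M) with (uniform_partition M (S i) - uniform_partition M i) by lra.
    apply chain_sum_sub_le; try assumption; [lra|].
    intros s u t Hs Hsu Hut Ht. apply defect_le; lra.
  - intros s u t Hs Hsu Hut Ht Hts.
    rewrite uniform_partition_0 in Hs. rewrite uniform_partition_last in Ht by lia.
    eapply Rle_trans; [apply defect_le; lra|].
    apply Rmult_le_compat_l; [exact HK|].
    eapply Rle_trans; [apply Rpower_le_self; lra | exact Hts].
Qed.

Lemma young_error_small (e : R) : 0 < e -> exists M, (8 <= M)%nat /\ young_error M < e.
Proof.
  intros He. set (A := sewing_const th * K * Rpower (2 * PI) th).
  assert (HA : 0 <= A).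
  { unfold A. pose proof (sewing_const_nonneg th Hth). pose proof (Rpower_pos (2 * PI) th).
    apply Rmult_le_pos; [apply Rmult_le_pos|]; lra. }
  destruct (Rpower_INR_eventually_lt (th - 1) (e / (A + 1))) as [N HN];
    [lra | apply Rdiv_lt_0_compat; lra|].
  exists (Nat.max N 8). split; [lia|].
  set (M := Nat.max N 8). specialize (HN M ltac:(lia) ltac:(lia)).
  assert (HM : 0 < INR M) by (apply lt_0_INR; lia).
  assert (E : young_error M = A * Rpower (INR M) (- (th - 1))).
  { unfold young_error, A, Rdiv.
    rewrite <- Rpower_mult_distr, Rpower_Rinv_l by (try apply Rinv_0_lt_compat; pose proof PI_RGT_0; lra).
    replace (- (th - 1)) with (1 + - th) by ring. rewrite Rpower_plus, Rpower_1 by lra. ring. }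
  rewrite E.
  apply Rle_lt_trans with (A * (e / (A + 1))); [apply Rmult_le_compat_l; lra|].
  apply Rmult_lt_reg_r with (A + 1); [lra|].
  replace (A * (e / (A + 1)) * (A + 1)) with (A * e) by (field; lra). nra.
Qed.

Lemma chain_sum_cauchy (eps : R) : 0 < eps -> exists d, 0 < d /\
  forall l1 l2, chain 0 l1 (2 * PI) -> chain_mesh_le d 0 l1 ->
    chain 0 l2 (2 * PI) -> chain_mesh_le d 0 l2 ->
    Rabs (chain_sum Xi 0 l1 - chain_sum Xi 0 l2) < eps.
Proof.
  intros He. destruct (young_error_small (eps / 4)) as [M [HM HMe]]; [lra|].
  assert (HMK : 0 <= INR M * K) by (apply Rmult_le_pos; [apply pos_INR | exact HK]).
  set (d := Rmin 1 (eps / (4 * (INR M * K + 1)))).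
  assert (Hd : 0 < d <= 1).
  { split; [apply Rmin_glb_lt; [lra | apply Rdiv_lt_0_compat; lra] | apply Rmin_l]. }
  assert (HMd : INR M * (K * d) < eps / 4).
  { assert (d <= eps / (4 * (INR M * K + 1))) by apply Rmin_r.
    rewrite <- Rmult_assoc.
    apply Rle_lt_trans with (INR M * K * (eps / (4 * (INR M * K + 1))));
      [apply Rmult_le_compat_l; lra|].
    apply Rmult_lt_reg_r with (4 * (INR M * K + 1)); [lra|].
    replace (INR M * K * (eps / (4 * (INR M * K + 1))) * (4 * (INR M * K + 1)))
      with (INR M * K * eps) by (field; lra). nra. }
  exists d. split; [lra|]. intros l1 l2 H1 Hm1 H2 Hm2.
  pose proof (chain_sum_near_uniform M d l1 HM Hd H1 Hm1).
  pose proof (chain_sum_near_uniform M d l2 HM Hd H2 Hm2).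
  set (U := partition_sum Xi M (uniform_partition M)) in *.
  pose proof (Rabs_sub_triang (chain_sum Xi 0 l1) U (chain_sum Xi 0 l2)).
  rewrite (Rabs_minus_sym U) in H3. lra.
Qed.

Lemma partition_sum_cauchy (eps : R) : 0 < eps -> exists d, 0 < d /\
  forall n t n' t', partition_mesh n t d -> partition_mesh n' t' d ->
    Rabs (partition_sum Xi n t - partition_sum Xi n' t') < eps.
Proof.
  intros He. destruct (chain_sum_cauchy eps He) as [d [Hd H]].
  exists d. split; [exact Hd|]. intros n t n' t' Ht Ht'.
  destruct (partition_mesh_chain Xi n t d Ht) as [H1 [H2 <-]].
  destruct (partition_mesh_chain Xi n' t' d Ht') as [H1' [H2' <-]].
  apply H; assumption.
Qed.

Lemma sewing_limit_exists : exists I, is_sewing_limit Xi I.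
Proof.
  set (v k := partition_sum Xi (S k) (uniform_partition (S k))).
  assert (Hv : ex_lim_seq_cauchy v).
  { intros [eps He]. simpl.
    destruct (partition_sum_cauchy eps He) as [d [Hd H]].
    destruct (uniform_partition_mesh_eventually d Hd) as [N HN].
    exists N. intros n m Hn Hm. apply H; apply HN; assumption. }
  apply ex_lim_seq_cauchy_corr in Hv. destruct Hv as [I HI].
  apply is_lim_seq_Reals in HI.
  exists I. intros eps He.
  destruct (partition_sum_cauchy (eps / 2)) as [d [Hd H]]; [lra|].
  destruct (uniform_partition_mesh_eventually d Hd) as [N HN].
  destruct (HI (eps / 2)) as [N' HN']; [lra|].
  exists d. split; [exact Hd|]. intros n t Ht.
  set (k := Nat.max N N').
  specialize (H n t (S k) (uniform_partition (S k)) Ht (HN k ltac:(lia))).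
  specialize (HN' k ltac:(lia)). unfold R_dist in HN'. fold (v k) in H.
  pose proof (Rabs_sub_triang (partition_sum Xi n t) (v k) I). lra.
Qed.

End SewingLimit.

Lemma sewing_limit_Rabs_le (Xi : R -> R -> R) (I B c : R) : is_sewing_limit Xi I -> 0 <= c ->
  (forall d l, 0 < d <= 1 -> chain 0 l (2 * PI) -> chain_mesh_le d 0 l ->
     Rabs (chain_sum Xi 0 l) <= B + c * d) ->
  Rabs I <= B.
Proof.
  intros HI Hc Hbound. apply Rle_plus_epsilon. intros eps He.
  destruct (HI (eps / 2)) as [d [Hd Hlim]]; [lra|].
  set (d' := Rmin (Rmin d 1) (eps / (2 * (c + 1)))).
  assert (Hd'0 : 0 < d') by (repeat apply Rmin_glb_lt; try apply Rdiv_lt_0_compat; lra).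
  assert (Hd'1 : d' <= Rmin d 1) by apply Rmin_l.
  assert (Hd'2 : d' <= eps / (2 * (c + 1))) by apply Rmin_r.
  pose proof (Rmin_l d 1). pose proof (Rmin_r d 1).
  destruct (uniform_partition_mesh_eventually d' Hd'0) as [N HN].
  specialize (HN N (le_n N)).
  specialize (Hlim _ _ (partition_mesh_mono _ _ _ d HN ltac:(lra))).
  destruct (partition_mesh_chain Xi _ _ _ HN) as [H1 [H2 H3]].
  specialize (Hbound d' _ ltac:(lra) H1 H2). rewrite H3 in Hbound.
  assert (c * d' <= eps / 2).
  { apply Rle_trans with (c * (eps / (2 * (c + 1)))); [apply Rmult_le_compat_l; lra|].
    apply Rmult_le_reg_r with (2 * (c + 1)); [lra|].
    replace (c * (eps / (2 * (c + 1))) * (2 * (c + 1))) with (c * eps) by (field; lra). nra. }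
  set (P := partition_sum Xi (S N) (uniform_partition (S N))) in *.
  pose proof (Rabs_sub_triang I P 0) as Htri. rewrite !Rminus_0_r, (Rabs_minus_sym I) in Htri. lra.
Qed.

(** * Hölder seminorms and the local norms of [f] *)

Lemma Lub_Rbar_ub_real (E : R -> Prop) (r : R) :
  is_finite (Lub_Rbar E) -> E r -> r <= real (Lub_Rbar E).
Proof.
  intros Hf Hr. destruct (Lub_Rbar_correct E) as [Hub _].
  specialize (Hub r Hr). rewrite <- Hf in Hub. exact Hub.
Qed.

Lemma holder_nonneg (al : R) (X : R -> R) :
  is_finite (holder al X) -> 0 <= real (holder al X).
Proof.
  intros Hf. eapply Rle_trans; [|apply Lub_Rbar_ub_real; [exact Hf|]].
  2:{ exists 0, 1. pose proof PI2_gt_1. repeat split; try lra; reflexivity. }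
  apply Rmult_le_pos; [apply Rabs_pos | left; apply Rinv_0_lt_compat, Rpower_pos].
Qed.

Lemma holder_le (al : R) (X : R -> R) (x y : R) : is_finite (holder al X) ->
  0 <= x < 2 * PI -> 0 <= y < 2 * PI ->
  Rabs (delta X x y) <= real (holder al X) * Rpower (Rabs (x - y)) al.
Proof.
  intros Hf Hx Hy. destruct (Req_dec x y) as [->|Hne].
  - unfold delta. rewrite !Rminus_diag, Rabs_R0, Rpower_0_l, Rmult_1_r.
    apply holder_nonneg, Hf.
  - assert (Hp := Rpower_pos (Rabs (x - y)) al).
    assert (H : Rabs (delta X x y) / Rpower (Rabs (x - y)) al <= real (holder al X)).
    { apply Lub_Rbar_ub_real; [exact Hf|]. exists x, y. repeat split; auto; lra. }
    unfold Rdiv in H. apply Rmult_le_compat_r with (r := Rpower (Rabs (x - y)) al) in H; [|lra].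
    rewrite Rmult_assoc, Rinv_l, Rmult_1_r in H by lra. exact H.
Qed.

Lemma holder_le_from_0 (al : R) (Y : R -> R) (u : R) : is_finite (holder al Y) ->
  0 < u < 2 * PI -> Rabs (Y u - Y 0) <= real (holder al Y) * Rpower u al.
Proof.
  intros Hf Hu. pose proof PI2_gt_1.
  pose proof (holder_le al Y 0 u Hf ltac:(lra) ltac:(lra)) as Hb.
  unfold delta in Hb. rewrite Rminus_0_l, Rabs_Ropp, (Rabs_right u) in Hb by lra. exact Hb.
Qed.

Lemma holder2_nonneg (al : R) (F : R -> R -> R) :
  is_finite (holder2 al F) -> 0 <= real (holder2 al F).
Proof.
  intros Hf. eapply Rle_trans; [|apply Lub_Rbar_ub_real; [exact Hf|]].
  2:{ exists 0, 1. pose proof PI2_gt_1. unfold D2; simpl. repeat split; try lra; reflexivity. }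
  apply Rmult_le_pos; [apply Rabs_pos | left; apply Rinv_0_lt_compat, Rpower_pos].
Qed.

Lemma holder2_le (al : R) (F : R -> R -> R) (x y : R) : is_finite (holder2 al F) ->
  0 <= x < 2 * PI -> x < y -> y < x + 2 * PI ->
  Rabs (F x y) <= real (holder2 al F) * Rpower (y - x) al.
Proof.
  intros Hf Hx Hxy Hy.
  replace (y - x) with (Rabs (x - y)) by (rewrite Rabs_left; lra).
  assert (Hp := Rpower_pos (Rabs (x - y)) al).
  assert (H : Rabs (F x y) / Rpower (Rabs (x - y)) al <= real (holder2 al F)).
  { apply Lub_Rbar_ub_real; [exact Hf|]. exists x, y. unfold D2; simpl. repeat split; auto; lra. }
  unfold Rdiv in H. apply Rmult_le_compat_r with (r := Rpower (Rabs (x - y)) al) in H; [|lra].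
  rewrite Rmult_assoc, Rinv_l, Rmult_1_r in H by lra. exact H.
Qed.

Lemma supnorm_le (Y : R -> R) (x : R) : is_finite (supnorm Y) -> 0 <= x < 2 * PI ->
  Rabs (Y x) <= real (supnorm Y).
Proof. intros Hf Hx. apply Lub_Rbar_ub_real; [exact Hf|]. exists x; auto. Qed.

Lemma Cnorm_finite_split (al : R) (Y : R -> R) : is_finite (Cnorm al Y) ->
  is_finite (holder al Y) /\ is_finite (supnorm Y) /\
  real (Cnorm al Y) = real (holder al Y) + real (supnorm Y).
Proof.
  unfold Cnorm. intros Hf. pose proof PI2_gt_1.
  assert (Hh : Rbar_le (Rabs (delta Y 0 1) / Rpower (Rabs (0 - 1)) al) (holder al Y)).
  { apply Lub_Rbar_correct. exists 0, 1. repeat split; lra. }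
  assert (Hs : Rbar_le (Rabs (Y 0)) (supnorm Y)).
  { apply Lub_Rbar_correct. exists 0. repeat split; lra. }
  destruct (holder al Y), (supnorm Y); try contradiction; try discriminate.
  repeat split; reflexivity.
Qed.

Lemma continuous_Rabs_sub_lt (f : R -> R) (x eps : R) : continuous f x -> 0 < eps ->
  exists d, 0 < d /\ forall y, Rabs (y - x) < d -> Rabs (f y - f x) < eps.
Proof.
  intros Hc He. apply continuity_pt_filterlim in Hc.
  destruct (Hc eps He) as [d [Hd H]]. exists d. split; [exact Hd|].
  intros y Hy. destruct (Req_dec y x) as [->|Hne].
  - rewrite Rminus_diag, Rabs_R0. exact He.
  - apply (H y). split; [split; [exact I | auto] | exact Hy].
Qed.

(* The Hölder seminorm only sees [[0, 2 PI)]; continuity extends the bound to [2 PI]. *)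
Lemma holder_le_2PI (al : R) (X : R -> R) (x : R) : 0 <= al -> is_finite (holder al X) ->
  continuous X (2 * PI) -> 0 <= x < 2 * PI ->
  Rabs (X (2 * PI) - X x) <= real (holder al X) * Rpower (2 * PI - x) al.
Proof.
  intros Hal Hf Hc Hx. apply Rle_plus_epsilon. intros eps He.
  destruct (continuous_Rabs_sub_lt X (2 * PI) eps Hc He) as [d [Hd H]].
  set (y := 2 * PI - Rmin (d / 2) ((2 * PI - x) / 2)).
  pose proof (Rmin_l (d / 2) ((2 * PI - x) / 2)).
  pose proof (Rmin_r (d / 2) ((2 * PI - x) / 2)).
  assert (0 < Rmin (d / 2) ((2 * PI - x) / 2)) by (apply Rmin_glb_lt; lra).
  assert (Hy : Rabs (X y - X (2 * PI)) < eps) by (apply H; unfold y; rewrite Rabs_left; lra).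
  assert (Hb := holder_le al X x y Hf Hx ltac:(unfold y; lra)). unfold delta in Hb.
  rewrite (Rabs_left (x - y)) in Hb by (unfold y; lra).
  assert (Rpower (- (x - y)) al <= Rpower (2 * PI - x) al)
    by (apply Rle_Rpower_l; [lra | unfold y; split; lra]).
  pose proof (holder_nonneg al X Hf).
  pose proof (Rabs_sub_triang (X (2 * PI)) (X y) (X x)).
  rewrite Rabs_minus_sym in Hy. nra.
Qed.

Lemma holder_le_closed (al : R) (X : R -> R) (x y : R) : 0 <= al -> is_finite (holder al X) ->
  continuous X (2 * PI) -> 0 <= x <= 2 * PI -> 0 <= y <= 2 * PI ->
  Rabs (X y - X x) <= real (holder al X) * Rpower (Rabs (y - x)) al.
Proof.
  intros Hal Hf Hc Hx Hy. pose proof (holder_nonneg al X Hf).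
  destruct (Req_dec x (2 * PI)) as [->|Ex]; destruct (Req_dec y (2 * PI)) as [->|Ey].
  - rewrite !Rminus_diag, Rabs_R0, Rpower_0_l. lra.
  - rewrite Rabs_minus_sym, (Rabs_left (y - 2 * PI)) by lra.
    replace (- (y - 2 * PI)) with (2 * PI - y) by ring. apply holder_le_2PI; auto; lra.
  - rewrite (Rabs_right (2 * PI - x)) by lra. apply holder_le_2PI; auto; lra.
  - rewrite (Rabs_minus_sym y x). apply (holder_le al X x y); auto; lra.
Qed.

Lemma C1_Rabs_sub_le (f : R -> R) (a b A : R) : is_C1 f -> a <= b ->
  (forall z, a <= z <= b -> Rabs (Derive f z) <= A) -> Rabs (f b - f a) <= A * (b - a).
Proof.
  intros Hf Hab HA.
  destruct (MVT_gen f a b (Derive f)) as [c [Hc Hm]].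
  - intros x _. apply Derive_correct, Hf.
  - intros x _. apply continuity_pt_filterlim, (@ex_derive_continuous R_AbsRing R_NormedModule), Hf.
  - rewrite Hm, Rabs_mult, (Rabs_right (b - a)) by lra.
    rewrite Rmin_left, Rmax_right in Hc by lra.
    apply Rmult_le_compat_r; [lra | apply HA, Hc].
Qed.

Lemma C1_dilate_Rabs_sub_le (f : R -> R) (lam s u A : R) : is_C1 f -> 0 < lam -> s <= u ->
  (forall z, s <= z <= u -> Rabs (Derive f (lam * z)) <= A) ->
  Rabs (f (lam * u) - f (lam * s)) <= A * lam * (u - s).
Proof.
  intros Hf Hlam Hsu HA. replace (A * lam * (u - s)) with (A * (lam * u - lam * s)) by ring.
  apply C1_Rabs_sub_le; [exact Hf | apply Rmult_le_compat_l; lra|].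
  intros z Hz. replace z with (lam * (z / lam)) by (field; lra). apply HA.
  split; apply Rmult_le_reg_l with lam; try exact Hlam;
    replace (lam * (z / lam)) with z by (field; lra); lra.
Qed.

Lemma C1_Rabs_plus_Derive_continuous (f : R -> R) (z : R) : is_C1 f ->
  continuity_pt (fun z => Rabs (f z) + Rabs (Derive f z)) z.
Proof.
  intros Hf. apply continuity_pt_filterlim.
  apply (continuous_plus (fun z => Rabs (f z)) (fun z => Rabs (Derive f z))).
  - apply continuous_Rabs_comp, (@ex_derive_continuous R_AbsRing R_NormedModule), Hf.
  - apply continuous_Rabs_comp, Hf.
Qed.

Lemma C1_dilate_bounded (f : R -> R) (lam L : R) : is_C1 f -> 0 < lam -> 0 <= L ->
  exists G, forall z, 0 <= z <= L -> Rabs (f (lam * z)) <= G /\ Rabs (Derive f (lam * z)) <= G.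
Proof.
  intros Hf Hlam HL.
  destruct (continuity_ab_maj (fun z => Rabs (f z) + Rabs (Derive f z)) 0 (lam * L))
    as [zmax [Hmax _]]; [nra | intros; apply C1_Rabs_plus_Derive_continuous, Hf|].
  exists (Rabs (f zmax) + Rabs (Derive f zmax)). intros z Hz.
  assert (0 <= lam * z <= lam * L) by (split; nra).
  specialize (Hmax (lam * z) H).
  pose proof (Rabs_pos (f (lam * z))). pose proof (Rabs_pos (Derive f (lam * z))). lra.
Qed.

Lemma loc_sup_ge (f : R -> R) (n : Z) (t : R) : is_C1 f -> 0 <= t <= 1 ->
  Rabs (f (IZR n + t)) + Rabs (Derive f (IZR n + t)) <= loc_sup f n.
Proof.
  intros Hf Ht. unfold loc_sup.
  set (g t := Rabs (f (IZR n + t)) + Rabs (Derive f (IZR n + t))).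
  set (E := fun r => exists t, 0 <= t <= 1 /\ r = g t).
  change (g t <= real (Lub_Rbar E)).
  destruct (continuity_ab_maj g 0 1) as [tmax [Hmax _]]; [lra| |].
  { intros c _. unfold g.
    apply (continuity_pt_comp (fun t => IZR n + t) (fun z => Rabs (f z) + Rabs (Derive f z))).
    - apply continuity_pt_plus; [apply continuity_pt_const; intros ? ?; reflexivity |
        apply derivable_continuous_pt, derivable_pt_id].
    - apply C1_Rabs_plus_Derive_continuous, Hf. }
  destruct (Lub_Rbar_correct E) as [Hub Hlub].
  assert (H1 : Rbar_le (g t) (Lub_Rbar E)) by (apply Hub; exists t; auto).
  assert (H2 : Rbar_le (Lub_Rbar E) (g tmax)).
  { apply Hlub. intros r [t' [Ht' ->]]. apply Hmax, Ht'. }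
  destruct (Lub_Rbar E); simpl in *; tauto.
Qed.

Lemma loc_sup_nonneg (f : R -> R) (n : Z) : is_C1 f -> 0 <= loc_sup f n.
Proof.
  intros Hf. eapply Rle_trans; [|apply (loc_sup_ge f n 0 Hf); lra].
  pose proof (Rabs_pos (f (IZR n + 0))). pose proof (Rabs_pos (Derive f (IZR n + 0))). lra.
Qed.

Lemma loc_sup_dilate_ge (f : R -> R) (lam z : R) (j : nat) : is_C1 f ->
  INR j <= lam * z <= INR j + 1 ->
  Rabs (f (lam * z)) <= loc_sup f (Z.of_nat j) /\ Rabs (Derive f (lam * z)) <= loc_sup f (Z.of_nat j).
Proof.
  intros Hf Hz. pose proof (loc_sup_ge f (Z.of_nat j) (lam * z - INR j) Hf ltac:(lra)) as H.
  replace (IZR (Z.of_nat j) + (lam * z - INR j)) with (lam * z) in H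
    by (rewrite <- INR_IZR_INZ; ring).
  pose proof (Rabs_pos (f (lam * z))). pose proof (Rabs_pos (Derive f (lam * z))). lra.
Qed.

(* The blocks only cover [[0, 2 PI lam]], so the indices [n >= 0] suffice. *)
Lemma triple_norm_ge (f : R -> R) (M : nat) : is_C1 f -> is_finite (triple_norm f) ->
  rsum (fun n => sqrt (1 + INR n) * loc_sup f (Z.of_nat n)) M <= real (triple_norm f).
Proof.
  intros Hf Hfin. unfold triple_norm in *.
  eapply Rle_trans; [|apply Lub_Rbar_ub_real; [exact Hfin | exists M; reflexivity]].
  set (g k := let n := (Z.of_nat k - Z.of_nat M)%Z in sqrt (1 + Rabs (IZR n)) * loc_sup f n).
  assert (Hg : forall k, 0 <= g k)
    by (intros k; apply Rmult_le_pos; [apply sqrt_pos | apply loc_sup_nonneg, Hf]).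
  replace (2 * M + 1)%nat with (M + S M)%nat by lia.
  rewrite rsum_app. cbn [rsum].
  assert (0 <= rsum g M) by (apply rsum_nonneg; auto).
  pose proof (Hg (M + M)%nat).
  replace (rsum (fun n => sqrt (1 + INR n) * loc_sup f (Z.of_nat n)) M)
    with (rsum (fun i => g (M + i)%nat) M); [lra|].
  apply rsum_ext. intros i _. unfold g.
  replace (Z.of_nat (M + i) - Z.of_nat M)%Z with (Z.of_nat i) by lia.
  rewrite <- INR_IZR_INZ, Rabs_right by (apply Rle_ge, pos_INR). reflexivity.
Qed.

(** * The modulated germ *)

(* [is_rough_integral X XX Z Z'] unfolds to [is_sewing_limit (rough_germ X XX Z Z')]. *)
Definition rough_germ (X : R -> R) (XX : R -> R -> R) (Z Z' : R -> R) (s t : R) : R :=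
  Z s * delta X s t + Z' s * XX s t.

Lemma rough_germ_defect (X : R -> R) (XX : R -> R -> R) (Z Z' : R -> R) (s u t : R) :
  XX s t - XX s u - XX u t = delta X s u * delta X u t ->
  defect (rough_germ X XX Z Z') s u t
    = remainder X Z Z' s u * delta X u t + (Z' u - Z' s) * XX u t.
Proof.
  intros Hchen. unfold defect, rough_germ, remainder.
  replace (XX s t) with (XX s u + XX u t + delta X s u * delta X u t) by lra.
  unfold delta. ring.
Qed.

Lemma remainder_mul (X g Y Y' : R -> R) (s u : R) :
  remainder X (fun x => g x * Y x) (fun x => g x * Y' x) s u
    = g s * remainder X Y Y' s u + (g u - g s) * Y u.
Proof. unfold remainder, delta. ring. Qed.

(* The least of the defect exponents [1 + kappa], [3/2 - kappa] and [2 - 2 kappa]. *)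
Definition sewing_exponent (kappa : R) : R := 1 + Rmin kappa (1/2 - kappa).

Lemma sewing_exponent_bounds (kappa : R) : 0 < kappa < 1/2 ->
  1 < sewing_exponent kappa /\ sewing_exponent kappa <= 1 + kappa /\
  sewing_exponent kappa <= 3/2 - kappa.
Proof.
  intros Hk. unfold sewing_exponent.
  pose proof (Rmin_l kappa (1/2 - kappa)). pose proof (Rmin_r kappa (1/2 - kappa)).
  assert (0 < Rmin kappa (1/2 - kappa)) by (apply Rmin_glb_lt; lra). lra.
Qed.

Lemma block_count_exists (r : R) : 0 < r -> exists M : nat, (1 <= M)%nat /\ INR M - 1 < r /\ r <= INR M.
Proof.
  intros Hr. destruct (INR_unbounded r) as [n Hn].
  assert (H : forall n, r <= INR n -> exists M : nat, (1 <= M)%nat /\ INR M - 1 < r /\ r <= INR M).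
  { induction n0 as [|m IH]; intros Hm; [simpl in Hm; lra|].
    destruct (Rle_dec r (INR m)) as [Hle|Hgt]; [apply IH, Hle|].
    exists (S m). rewrite S_INR in *. split; [lia | lra]. }
  apply (H n). lra.
Qed.

Definition block_point (lam : R) (M j : nat) : R := if (j <? M)%nat then INR j / lam else 2 * PI.

Lemma block_point_spec (lam : R) (M : nat) : 1 <= lam -> (1 <= M)%nat ->
  INR M - 1 < 2 * PI * lam -> 2 * PI * lam <= INR M ->
  block_point lam M O = 0 /\ block_point lam M M = 2 * PI /\
  forall j, (j < M)%nat ->
    0 <= block_point lam M j < block_point lam M (S j) /\ block_point lam M (S j) <= 2 * PI /\
    block_point lam M (S j) <= (INR j + 1) / lam /\
    block_point lam M (S j) - block_point lam M j <= / lam /\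
    forall z, block_point lam M j <= z <= block_point lam M (S j) ->
      INR j <= lam * z <= INR j + 1.
Proof.
  intros Hl HM Ha Hb. unfold block_point.
  assert (Hmul : forall x, lam * (x / lam) = x) by (intros; field; lra).
  assert (Hle : forall x y, x <= y -> x / lam <= y / lam).
  { intros x y Hxy. apply Rmult_le_compat_r; [left; apply Rinv_0_lt_compat|]; lra. }
  assert (Hlt : forall x y, x < y -> x / lam < y / lam).
  { intros x y Hxy. apply Rmult_lt_compat_r; [apply Rinv_0_lt_compat|]; lra. }
  assert (H2PI : 2 * PI = (2 * PI * lam) / lam) by (field; lra).
  split; [rewrite (proj2 (Nat.ltb_lt 0 M)) by lia; simpl INR; unfold Rdiv; ring|].
  split; [rewrite (proj2 (Nat.ltb_ge M M)) by lia; reflexivity|].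
  intros j Hj. rewrite (proj2 (Nat.ltb_lt j M)) by exact Hj.
  pose proof (pos_INR j).
  assert (Hj0 : 0 <= INR j / lam) by (replace 0 with (0 / lam) by (field; lra); apply Hle; lra).
  assert (Hnext : exists b, b <= (INR j + 1) / lam /\ INR j / lam < b /\ b <= 2 * PI /\
                  (if (S j <? M)%nat then INR (S j) / lam else 2 * PI) = b).
  { destruct (S j <? M)%nat eqn:E; [apply Nat.ltb_lt in E | apply Nat.ltb_ge in E].
    - assert (INR j + 1 + 1 <= INR M) by (rewrite <- !S_INR; apply le_INR; lia).
      exists (INR (S j) / lam). rewrite S_INR, H2PI.
      repeat split; [lra | apply Hlt; lra | apply Hle; lra].
    - assert (M = S j) by lia. subst M. rewrite S_INR in *.
      exists (2 * PI). rewrite H2PI at 1 2. repeat split; [apply Hle | apply Hlt | ]; lra. }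
  destruct Hnext as [b [Hb1 [Hb2 [Hb3 ->]]]].
  assert (Hstep : b - INR j / lam <= / lam).
  { replace (/ lam) with ((INR j + 1) / lam - INR j / lam) by (field; lra). lra. }
  repeat split; try lra.
  - rewrite <- (Hmul (INR j)). apply Rmult_le_compat_l; lra.
  - rewrite <- (Hmul (INR j + 1)). apply Rmult_le_compat_l; lra.
Qed.

Section Germ.

Variables (kappa lam : R) (f X Y Y' : R -> R) (XX : R -> R -> R).
Variables (HX HXX HR HY HY1 N1 T : R).
Hypotheses (Hk : 0 < kappa < 1/2) (Hlam : 1 <= lam) (Hf : is_C1 f) (Hrp : rough_path X XX).
Hypothesis X_holder : forall x y, 0 <= x <= 2 * PI -> 0 <= y <= 2 * PI ->
  Rabs (X y - X x) <= HX * Rpower (Rabs (y - x)) (1/2 - kappa).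
Hypothesis XX_holder : forall x y, 0 <= x < 2 * PI -> x < y -> y < x + 2 * PI ->
  Rabs (XX x y) <= HXX * Rpower (y - x) (1 - 2 * kappa).
Hypothesis remainder_holder : forall x y, 0 <= x < 2 * PI -> x < y -> y < x + 2 * PI ->
  Rabs (remainder X Y Y' x y) <= HR * Rpower (y - x) (1/2 + 2 * kappa).
Hypothesis Y'_holder : forall x y, 0 <= x < 2 * PI -> 0 <= y < 2 * PI ->
  Rabs (delta Y' x y) <= HY1 * Rpower (Rabs (x - y)) (3 * kappa).
Hypothesis Y'_bounded : forall x, 0 <= x < 2 * PI -> Rabs (Y' x) <= N1.
Hypothesis Y_holder_0 : forall u, 0 < u < 2 * PI ->
  Rabs (Y u - Y 0) <= HY * Rpower u (1/2 - kappa).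
Hypotheses (HX0 : 0 <= HX) (HXX0 : 0 <= HXX) (HR0 : 0 <= HR) (HY0 : 0 <= HY) (HY10 : 0 <= HY1).
Hypothesis triple_norm_bound :
  forall M, rsum (fun n => sqrt (1 + INR n) * loc_sup f (Z.of_nat n)) M <= T.

Let Xi := rough_germ X XX (fun x => f (lam * x) * Y x) (fun x => f (lam * x) * Y' x).
Let th := sewing_exponent kappa.
Let p := Rpower lam (kappa - 1/2).
Let r := Rpower lam (2 * kappa - 1).
Let W := p * Rabs (Y 0) * HX + r * (HY * HX + HXX * (HY1 + N1) + HR * HX).

Lemma N1_nonneg : 0 <= N1.
Proof. pose proof (Rabs_pos (Y' 0)). pose proof (Y'_bounded 0). pose proof PI2_gt_1. lra. Qed.

Definition defect_majorant (A B h : R) : R :=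
  A * (HR * HX * Rpower h (1 + kappa) + lam * B * HX * Rpower h (3/2 - kappa)
       + HY1 * HXX * Rpower h (1 + kappa) + lam * N1 * HXX * Rpower h (2 - 2 * kappa)).

Lemma modulated_remainder_le (A B s u : R) : 0 <= s -> s < u -> u < 2 * PI ->
  (forall z, s <= z <= u -> Rabs (f (lam * z)) <= A /\ Rabs (Derive f (lam * z)) <= A) ->
  Rabs (Y u) <= B ->
  Rabs (remainder X (fun x => f (lam * x) * Y x) (fun x => f (lam * x) * Y' x) s u)
    <= A * HR * Rpower (u - s) (1/2 + 2 * kappa) + A * lam * B * (u - s).
Proof.
  intros Hs Hsu Hu HA HB. rewrite remainder_mul.
  assert (HfS : Rabs (f (lam * s)) <= A) by (apply HA; lra).
  assert (Hlip : Rabs (f (lam * u) - f (lam * s)) <= A * lam * (u - s))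
    by (apply C1_dilate_Rabs_sub_le; [exact Hf | lra | lra | intros z Hz; apply HA; lra]).
  replace (A * lam * B * (u - s)) with (A * lam * (u - s) * B) by ring.
  rewrite Rmult_assoc. eapply Rle_trans; [apply Rabs_triang|].
  apply Rplus_le_compat; apply Rabs_mult_le; auto. apply remainder_holder; lra.
Qed.

Lemma modulated_increment_le (A s u : R) : 0 <= s -> s < u -> u < 2 * PI ->
  (forall z, s <= z <= u -> Rabs (f (lam * z)) <= A /\ Rabs (Derive f (lam * z)) <= A) ->
  Rabs (f (lam * u) * Y' u - f (lam * s) * Y' s)
    <= A * HY1 * Rpower (u - s) (3 * kappa) + A * lam * N1 * (u - s).
Proof.
  intros Hs Hsu Hu HA.
  assert (HfU : Rabs (f (lam * u)) <= A) by (apply HA; lra).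
  assert (Hlip : Rabs (f (lam * u) - f (lam * s)) <= A * lam * (u - s))
    by (apply C1_dilate_Rabs_sub_le; [exact Hf | lra | lra | intros z Hz; apply HA; lra]).
  replace (f (lam * u) * Y' u - f (lam * s) * Y' s)
    with (f (lam * u) * delta Y' s u + (f (lam * u) - f (lam * s)) * Y' s) by (unfold delta; ring).
  replace (A * lam * N1 * (u - s)) with (A * lam * (u - s) * N1) by ring.
  rewrite Rmult_assoc. eapply Rle_trans; [apply Rabs_triang|].
  apply Rplus_le_compat; apply Rabs_mult_le; auto; [|apply Y'_bounded; lra].
  replace (u - s) with (Rabs (s - u)) by (rewrite Rabs_left; lra).
  apply Y'_holder; lra.
Qed.

(* Each term of the defect pairs a small increment on [[s, u]] with one on
   [[u, t]]; the exponents add up to at least [th > 1]. *)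
Lemma germ_defect_le (A B s u t : R) :
  0 <= s -> s < u -> u < t -> t <= 2 * PI -> t < s + 2 * PI ->
  (forall z, s <= z <= t -> Rabs (f (lam * z)) <= A /\ Rabs (Derive f (lam * z)) <= A) ->
  Rabs (Y u) <= B ->
  Rabs (defect Xi s u t) <= defect_majorant A B (t - s).
Proof.
  intros Hs Hsu Hut Ht Hts HA HB.
  destruct Hrp as [_ [_ [_ [_ [_ Hchen]]]]].
  unfold Xi. rewrite rough_germ_defect by (apply Hchen; lra).
  pose proof N1_nonneg.
  assert (HA' : forall z, s <= z <= u -> Rabs (f (lam * z)) <= A /\ Rabs (Derive f (lam * z)) <= A)
    by (intros; apply HA; lra).
  pose proof (modulated_remainder_le A B s u Hs Hsu ltac:(lra) HA' HB) as HRZ.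
  pose proof (modulated_increment_le A s u Hs Hsu ltac:(lra) HA') as HZ'.
  assert (HdX : Rabs (delta X u t) <= HX * Rpower (t - u) (1/2 - kappa)).
  { rewrite <- (Rabs_right (t - u)) by lra. apply X_holder; lra. }
  assert (HXXut : Rabs (XX u t) <= HXX * Rpower (t - u) (1 - 2 * kappa)) by (apply XX_holder; lra).
  pose proof (Rpower_mult_le_adjacent s u t (1/2 + 2 * kappa) (1/2 - kappa) (1 + kappa)
                Hsu Hut ltac:(lra) ltac:(lra) ltac:(lra)).
  pose proof (Rpower_mult_le_adjacent s u t 1 (1/2 - kappa) (3/2 - kappa)
                Hsu Hut ltac:(lra) ltac:(lra) ltac:(lra)).
  pose proof (Rpower_mult_le_adjacent s u t (3 * kappa) (1 - 2 * kappa) (1 + kappa)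
                Hsu Hut ltac:(lra) ltac:(lra) ltac:(lra)).
  pose proof (Rpower_mult_le_adjacent s u t 1 (1 - 2 * kappa) (2 - 2 * kappa)
                Hsu Hut ltac:(lra) ltac:(lra) ltac:(lra)).
  rewrite Rpower_1 in * by lra.
  eapply Rle_trans; [apply Rabs_triang|].
  eapply Rle_trans; [apply Rplus_le_compat; apply Rabs_mult_le; eassumption|].
  unfold defect_majorant.
  assert (0 <= A) by (pose proof (Rabs_pos (f (lam * s))); destruct (HA s); lra).
  assert (0 <= B) by (pose proof (Rabs_pos (Y u)); lra).
  assert (0 <= A * HR * HX) by (repeat apply Rmult_le_pos; lra).
  assert (0 <= A * lam * B * HX) by (repeat apply Rmult_le_pos; lra).
  assert (0 <= A * HY1 * HXX) by (repeat apply Rmult_le_pos; lra).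
  assert (0 <= A * lam * N1 * HXX) by (repeat apply Rmult_le_pos; lra).
  nra.
Qed.

Lemma defect_majorant_rescale (A B h l : R) : 0 <= A -> 0 <= B -> 0 < h <= l ->
  defect_majorant A B h <= defect_majorant A B l / Rpower l th * Rpower h th.
Proof.
  intros HA HB Hh. pose proof N1_nonneg.
  destruct (sewing_exponent_bounds kappa Hk) as [_ [Hth1 Hth2]].
  pose proof (Rpower_le_rescale h l th (1 + kappa) Hh Hth1).
  pose proof (Rpower_le_rescale h l th (3/2 - kappa) Hh Hth2).
  pose proof (Rpower_le_rescale h l th (2 - 2 * kappa) Hh ltac:(unfold th; lra)).
  assert (Hl : 0 < Rpower l th) by apply Rpower_pos.
  unfold defect_majorant.
  set (g e := Rpower l e / Rpower l th * Rpower h th) in *.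
  replace (A * (HR * HX * Rpower l (1 + kappa) + lam * B * HX * Rpower l (3/2 - kappa)
       + HY1 * HXX * Rpower l (1 + kappa) + lam * N1 * HXX * Rpower l (2 - 2 * kappa))
       / Rpower l th * Rpower h th)
    with (A * (HR * HX * g (1 + kappa) + lam * B * HX * g (3/2 - kappa)
       + HY1 * HXX * g (1 + kappa) + lam * N1 * HXX * g (2 - 2 * kappa)))
    by (unfold g; field; lra).
  apply Rmult_le_compat_l; [exact HA|].
  repeat apply Rplus_le_compat; apply Rmult_le_compat_l; auto;
    repeat apply Rmult_le_pos; lra.
Qed.

Lemma germ_block_error (A B a b l : R) :
  0 <= a -> a < b -> b <= 2 * PI -> b - a <= l -> l <= 1 ->
  (forall z, a <= z <= b -> Rabs (f (lam * z)) <= A /\ Rabs (Derive f (lam * z)) <= A) ->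
  (forall u, a < u < b -> Rabs (Y u) <= B) ->
  forall l', chain a l' b ->
  Rabs (chain_sum Xi a l' - Xi a b) <= sewing_const th * defect_majorant A B l.
Proof.
  intros Ha Hab Hb Hl Hl1 HA HB l' Hch. pose proof PI2_gt_1.
  destruct (sewing_exponent_bounds kappa Hk) as [Hth _].
  assert (HA0 : 0 <= A) by (pose proof (Rabs_pos (f (lam * a))); destruct (HA a); lra).
  assert (HB0 : 0 <= B) by (pose proof (Rabs_pos (Y ((a + b) / 2))); pose proof (HB ((a + b) / 2)); lra).
  set (K := defect_majorant A B l / Rpower l th).
  assert (HK : 0 <= K).
  { unfold K, defect_majorant. pose proof N1_nonneg.
    apply Rmult_le_pos; [|left; apply Rinv_0_lt_compat, Rpower_pos].
    apply Rmult_le_pos; [exact HA0|].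
    repeat apply Rplus_le_le_0_compat; repeat apply Rmult_le_pos; try lra; left; apply Rpower_pos. }
  eapply Rle_trans; [apply (chain_sum_sub_le Xi th K a b); auto|].
  - intros s u t Hs Hsu Hut Ht.
    eapply Rle_trans; [apply (germ_defect_le A B s u t); try lra|].
    + intros z Hz. apply HA. lra.
    + apply HB. lra.
    + unfold K. apply defect_majorant_rescale; lra.
  - rewrite Rmult_assoc. apply Rmult_le_compat_l; [apply sewing_const_nonneg, Hth|].
    apply Rle_trans with (K * Rpower l th).
    + apply Rmult_le_compat_l; [exact HK | apply Rle_Rpower_l; unfold th; lra].
    + unfold K. right. field. pose proof (Rpower_pos l th). lra.
Qed.

Lemma Y_Rabs_le (u v : R) : 0 <= u <= v -> u < 2 * PI ->
  Rabs (Y u) <= Rabs (Y 0) + HY * Rpower v (1/2 - kappa).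
Proof.
  intros Huv Hu. pose proof (Rpower_pos v (1/2 - kappa)).
  destruct (Req_dec u 0) as [->|Hu0]; [nra|].
  pose proof (Rabs_sub_triang (Y u) (Y 0) 0). rewrite !Rminus_0_r in H0.
  assert (Rpower u (1/2 - kappa) <= Rpower v (1/2 - kappa)) by (apply Rle_Rpower_l; lra).
  pose proof (Y_holder_0 u ltac:(lra)). nra.
Qed.

Lemma germ_defect_le_window : exists K, 0 <= K /\
  forall s u t, 0 <= s -> s < u -> u < t -> t <= 2 * PI -> t - s <= 1 ->
    Rabs (defect Xi s u t) <= K * Rpower (t - s) th.
Proof.
  pose proof PI2_gt_1.
  destruct (C1_dilate_bounded f lam (2 * PI) Hf ltac:(lra) ltac:(pose proof PI_RGT_0; lra))
    as [G HG].
  set (BY := Rabs (Y 0) + HY * Rpower (2 * PI) (1/2 - kappa)).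
  assert (HG0 : 0 <= G).
  { pose proof (Rabs_pos (f (lam * 0))). pose proof PI_RGT_0.
    destruct (HG 0) as [Hf0 _]; lra. }
  assert (HBY0 : 0 <= BY).
  { pose proof (Rabs_pos (Y 0)). pose proof (Rpower_pos (2 * PI) (1/2 - kappa)). unfold BY. nra. }
  exists (defect_majorant G BY 1).
  split.
  - unfold defect_majorant. pose proof N1_nonneg. apply Rmult_le_pos; [exact HG0|].
    repeat apply Rplus_le_le_0_compat; repeat apply Rmult_le_pos; try lra; left; apply Rpower_pos.
  - intros s u t Hs Hsu Hut Ht Hts.
    eapply Rle_trans; [apply (germ_defect_le G BY s u t); try lra|].
    + intros z Hz. apply HG. lra.
    + apply Y_Rabs_le; lra.
    + eapply Rle_trans; [apply (defect_majorant_rescale G BY (t - s) 1); lra|].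
      rewrite Rpower_1_l. right. field.
Qed.

Lemma germ_Rabs_le (A B a b : R) : 0 <= a -> a < b -> b <= 2 * PI -> b - a <= / lam ->
  Rabs (f (lam * a)) <= A -> Rabs (Y a) <= B ->
  Rabs (Xi a b) <= A * (B * HX * p + N1 * HXX * r).
Proof.
  intros Ha Hab Hb Hl HA HB. pose proof PI2_gt_1.
  assert (Hl1 : / lam <= 1) by (rewrite <- Rinv_1; apply Rinv_le_contravar; lra).
  assert (Hpow : forall e, 0 <= e -> Rpower (b - a) e <= Rpower lam (- e)).
  { intros e He. rewrite <- Rpower_Rinv_l by lra. apply Rle_Rpower_l; lra. }
  assert (HdX : Rabs (delta X a b) <= HX * p).
  { eapply Rle_trans; [apply X_holder; lra|]. rewrite Rabs_right by lra.
    apply Rmult_le_compat_l; [exact HX0|].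
    unfold p. replace (kappa - 1/2) with (- (1/2 - kappa)) by ring. apply Hpow. lra. }
  assert (HXXab : Rabs (XX a b) <= HXX * r).
  { eapply Rle_trans; [apply XX_holder; lra|]. apply Rmult_le_compat_l; [exact HXX0|].
    unfold r. replace (2 * kappa - 1) with (- (1 - 2 * kappa)) by ring. apply Hpow. lra. }
  assert (HY'a : Rabs (Y' a) <= N1) by (apply Y'_bounded; lra).
  unfold Xi, rough_germ. eapply Rle_trans; [apply Rabs_triang|].
  replace (A * (B * HX * p + N1 * HXX * r)) with (A * B * (HX * p) + A * N1 * (HXX * r)) by ring.
  apply Rplus_le_compat; apply Rabs_mult_le; try apply Rabs_mult_le; assumption.
Qed.

Lemma defect_majorant_inv_lam (A B : R) :
  defect_majorant A B (/ lam)
    = A * (B * HX * p + N1 * HXX * r + (HR * HX + HY1 * HXX) * Rpower lam (- (1 + kappa))).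
Proof.
  unfold defect_majorant, p, r. rewrite !Rpower_Rinv_l by lra.
  assert (E : forall e, lam * Rpower lam (- e) = Rpower lam (1 - e)).
  { intros e. replace (1 - e) with (1 + - e) by ring.
    rewrite Rpower_plus, Rpower_1 by lra. reflexivity. }
  replace (lam * B * HX * Rpower lam (- (3/2 - kappa)))
    with (B * HX * (lam * Rpower lam (- (3/2 - kappa)))) by ring.
  replace (lam * N1 * HXX * Rpower lam (- (2 - 2 * kappa)))
    with (N1 * HXX * (lam * Rpower lam (- (2 - 2 * kappa)))) by ring.
  rewrite !E. replace (1 - (3/2 - kappa)) with (kappa - 1/2) by lra.
  replace (1 - (2 - 2 * kappa)) with (2 * kappa - 1) by ring. ring.
Qed.

Lemma germ_block_terms_le (A B a b : R) :
  0 <= a -> a < b -> b <= 2 * PI -> b - a <= / lam ->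
  (forall z, a <= z <= b -> Rabs (f (lam * z)) <= A /\ Rabs (Derive f (lam * z)) <= A) ->
  Rabs (Y a) <= B ->
  Rabs (Xi a b) + sewing_const th * defect_majorant A B (/ lam)
    <= (sewing_const th + 1) * A * (HX * (B * p) + r * (HXX * (HY1 + N1) + HR * HX)).
Proof.
  intros Ha Hab Hb Hl HA HB.
  destruct (HA a) as [HAa _]; [lra|].
  pose proof (germ_Rabs_le A B a b Ha Hab Hb Hl HAa HB) as HXi.
  rewrite defect_majorant_inv_lam.
  pose proof N1_nonneg.
  assert (HA0 : 0 <= A) by (pose proof (Rabs_pos (f (lam * a))); lra).
  assert (HC : 0 <= sewing_const th)
    by (apply sewing_const_nonneg; apply (sewing_exponent_bounds kappa Hk)).
  assert (Hq : Rpower lam (- (1 + kappa)) <= r) by (apply Rle_Rpower; lra).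
  assert (Hr : 0 <= r) by (left; apply Rpower_pos).
  set (C := sewing_const th) in *. set (q := Rpower lam (- (1 + kappa))) in *.
  set (K0 := HXX * (HY1 + N1) + HR * HX).
  assert (HK0 : 0 <= K0) by (unfold K0; nra).
  assert (Hsum : B * HX * p + N1 * HXX * r + (HR * HX + HY1 * HXX) * q
                 <= HX * (B * p) + r * K0).
  { assert ((HR * HX + HY1 * HXX) * q <= (HR * HX + HY1 * HXX) * r)
      by (apply Rmult_le_compat_l; [nra | exact Hq]).
    unfold K0. nra. }
  assert (HXi' : Rabs (Xi a b) <= A * (HX * (B * p) + r * K0)).
  { eapply Rle_trans; [exact HXi|]. apply Rmult_le_compat_l; [exact HA0|].
    assert (0 <= r * HXX * HY1) by (repeat apply Rmult_le_pos; assumption).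
    assert (0 <= r * HR * HX) by (repeat apply Rmult_le_pos; assumption).
    unfold K0. nra. }
  assert (C * (A * (B * HX * p + N1 * HXX * r + (HR * HX + HY1 * HXX) * q))
          <= C * (A * (HX * (B * p) + r * K0)))
    by (apply Rmult_le_compat_l; [exact HC | apply Rmult_le_compat_l; assumption]).
  lra.
Qed.

Lemma germ_block_bound (A B rho a b : R) :
  0 <= a -> a < b -> b <= 2 * PI -> b - a <= / lam -> 1 <= rho ->
  (forall z, a <= z <= b -> Rabs (f (lam * z)) <= A /\ Rabs (Derive f (lam * z)) <= A) ->
  Rabs (Y a) <= B -> B * p <= Rabs (Y 0) * p + HY * rho * r ->
  Rabs (Xi a b) + sewing_const th * defect_majorant A B (/ lam)
    <= (sewing_const th + 1) * W * (rho * A).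
Proof.
  intros Ha Hab Hb Hl Hrho HA HB HBp.
  eapply Rle_trans; [apply (germ_block_terms_le A B a b); assumption|].
  pose proof N1_nonneg. pose proof (Rabs_pos (Y 0)).
  assert (HA0 : 0 <= A) by (pose proof (Rabs_pos (f (lam * a))); destruct (HA a); lra).
  assert (HC : 0 <= sewing_const th)
    by (apply sewing_const_nonneg; apply (sewing_exponent_bounds kappa Hk)).
  assert (Hp : 0 <= p) by (left; apply Rpower_pos). assert (Hr : 0 <= r) by (left; apply Rpower_pos).
  set (K0 := HXX * (HY1 + N1) + HR * HX).
  assert (HK0 : 0 <= K0) by (unfold K0; nra).
  assert (HX * (B * p) <= HX * (Rabs (Y 0) * p + HY * rho * r))
    by (apply Rmult_le_compat_l; [exact HX0 | exact HBp]).
  assert (0 <= HX * (Rabs (Y 0) * p) + r * K0)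
    by (apply Rplus_le_le_0_compat; repeat apply Rmult_le_pos; assumption).
  assert (HX * (B * p) + r * K0 <= rho * (p * Rabs (Y 0) * HX + r * (HY * HX + K0))) by nra.
  replace ((sewing_const th + 1) * W * (rho * A))
    with ((sewing_const th + 1) * A * (rho * (p * Rabs (Y 0) * HX + r * (HY * HX + K0))))
    by (unfold W, K0; ring).
  apply Rmult_le_compat_l; [nra | assumption].
Qed.

Lemma block_Y_weight (j : nat) :
  (Rabs (Y 0) + HY * Rpower ((INR j + 1) / lam) (1/2 - kappa)) * p
  <= Rabs (Y 0) * p + HY * sqrt (1 + INR j) * r.
Proof.
  pose proof (pos_INR j).
  assert (Hsplit : Rpower ((INR j + 1) / lam) (1/2 - kappa) = Rpower (INR j + 1) (1/2 - kappa) * p).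
  { unfold Rdiv, p. rewrite <- Rpower_mult_distr, Rpower_Rinv_l by (try apply Rinv_0_lt_compat; lra).
    f_equal. f_equal. lra. }
  assert (Hsq : p * p = r) by (unfold p, r; rewrite <- Rpower_plus; f_equal; lra).
  assert (Hrho : Rpower (INR j + 1) (1/2 - kappa) <= sqrt (1 + INR j)).
  { rewrite Rplus_comm, <- Rpower_sqrt by lra. apply Rle_Rpower; lra. }
  rewrite Hsplit, Rmult_plus_distr_r. apply Rplus_le_compat_l.
  replace (HY * (Rpower (INR j + 1) (1/2 - kappa) * p) * p)
    with (HY * Rpower (INR j + 1) (1/2 - kappa) * r) by (rewrite <- Hsq; ring).
  apply Rmult_le_compat_r; [left; apply Rpower_pos|].
  apply Rmult_le_compat_l; [exact HY0 | exact Hrho].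
Qed.

Section Blocks.

Variable M : nat.
Hypotheses (HM1 : (1 <= M)%nat) (HMa : INR M - 1 < 2 * PI * lam) (HMb : 2 * PI * lam <= INR M).

Let c := block_point lam M.
Let A (j : nat) := loc_sup f (Z.of_nat j).
Let B (j : nat) := Rabs (Y 0) + HY * Rpower ((INR j + 1) / lam) (1/2 - kappa).

Lemma block_f_bound (j : nat) (z : R) : (j < M)%nat -> c j <= z <= c (S j) ->
  Rabs (f (lam * z)) <= A j /\ Rabs (Derive f (lam * z)) <= A j.
Proof.
  intros Hj Hz. destruct (block_point_spec lam M Hlam HM1 HMa HMb) as [_ [_ CJ]]. fold c in CJ.
  apply loc_sup_dilate_ge; [exact Hf|]. apply (CJ j Hj), Hz.
Qed.

Lemma block_Y_bound (j : nat) (u : R) : (j < M)%nat -> c j <= u < c (S j) -> Rabs (Y u) <= B j.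
Proof.
  intros Hj Hu. destruct (block_point_spec lam M Hlam HM1 HMa HMb) as [_ [_ CJ]]. fold c in CJ.
  destruct (CJ j Hj) as [E1 [E2 [E3 _]]]. apply Y_Rabs_le; lra.
Qed.

Lemma block_germ_error (j : nat) (l : list R) : (j < M)%nat -> chain (c j) l (c (S j)) ->
  Rabs (chain_sum Xi (c j) l - Xi (c j) (c (S j)))
    <= sewing_const th * defect_majorant (A j) (B j) (/ lam).
Proof.
  intros Hj Hl. destruct (block_point_spec lam M Hlam HM1 HMa HMb) as [_ [_ CJ]]. fold c in CJ.
  destruct (CJ j Hj) as [E1 [E2 [E3 [E4 _]]]].
  assert (/ lam <= 1) by (rewrite <- Rinv_1; apply Rinv_le_contravar; lra).
  apply germ_block_error; try assumption; try lra.
  - intros z Hz. apply block_f_bound; [exact Hj | lra].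
  - intros u Hu. apply block_Y_bound; [exact Hj | lra].
Qed.

Lemma block_term_le (j : nat) : (j < M)%nat ->
  Rabs (Xi (c j) (c (S j))) + sewing_const th * defect_majorant (A j) (B j) (/ lam)
    <= (sewing_const th + 1) * W * (sqrt (1 + INR j) * A j).
Proof.
  intros Hj. destruct (block_point_spec lam M Hlam HM1 HMa HMb) as [_ [_ CJ]]. fold c in CJ.
  destruct (CJ j Hj) as [E1 [E2 [E3 [E4 _]]]]. pose proof (pos_INR j).
  apply germ_block_bound; try lra.
  - pose proof (sqrt_le_1_alt 1 (1 + INR j) ltac:(lra)) as Hsq. rewrite sqrt_1 in Hsq. exact Hsq.
  - intros z Hz. apply block_f_bound; assumption.
  - apply block_Y_bound; [exact Hj | lra].
  - apply block_Y_weight.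
Qed.

Lemma chain_sum_le_blocks (Kg d : R) (l : list R) : 0 <= Kg ->
  (forall s u t, 0 <= s -> s < u -> u < t -> t <= 2 * PI -> t - s <= 1 ->
     Rabs (defect Xi s u t) <= Kg * Rpower (t - s) th) ->
  0 < d <= 1 -> chain 0 l (2 * PI) -> chain_mesh_le d 0 l ->
  Rabs (chain_sum Xi 0 l) <= (sewing_const th + 1) * T * W + INR M * Kg * d.
Proof.
  intros HKg Hdef Hd Hch Hmesh.
  destruct (block_point_spec lam M Hlam HM1 HMa HMb) as [C0 [CM CJ]].
  fold c in C0, CM, CJ. rewrite <- C0 in Hch, Hmesh |- *. rewrite <- CM in Hch.
  rewrite (Rmult_assoc (INR M)). eapply Rle_trans.
  { apply (chain_sum_Rabs_le_block_terms Xi d (Kg * d) M c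
      (fun j => sewing_const th * defect_majorant (A j) (B j) (/ lam)) l); try assumption.
    - apply Rmult_le_pos; lra.
    - intros j Hj. apply (CJ j Hj).
    - intros j Hj l' Hl'. apply block_germ_error; assumption.
    - intros s u t Hs Hsu Hut Ht Hts. rewrite C0 in Hs. rewrite CM in Ht.
      eapply Rle_trans; [apply Hdef; lra|]. apply Rmult_le_compat_l; [exact HKg|].
      destruct (sewing_exponent_bounds kappa Hk) as [Hth _].
      eapply Rle_trans; [apply Rpower_le_self; unfold th; lra | lra]. }
  apply Rplus_le_compat_r.
  eapply Rle_trans; [apply rsum_le; intros j Hj; apply block_term_le, Hj|].
  rewrite rsum_scal_l.
  replace ((sewing_const th + 1) * T * W) with ((sewing_const th + 1) * W * T) by ring.
  apply Rmult_le_compat_l; [|apply triple_norm_bound].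
  pose proof (sewing_const_nonneg th (proj1 (sewing_exponent_bounds kappa Hk))).
  pose proof N1_nonneg. pose proof (Rabs_pos (Y 0)).
  assert (0 <= p) by (left; apply Rpower_pos). assert (0 <= r) by (left; apply Rpower_pos).
  apply Rmult_le_pos; [lra|]. unfold W.
  apply Rplus_le_le_0_compat; repeat apply Rmult_le_pos; try lra; nra.
Qed.

End Blocks.

Lemma germ_integral_bound : exists I, is_sewing_limit Xi I /\
  Rabs I <= (sewing_const th + 1) * T * W.
Proof.
  pose proof PI2_gt_1.
  destruct germ_defect_le_window as [Kg [HKg Hdef]].
  destruct (sewing_exponent_bounds kappa Hk) as [Hth _].
  destruct (sewing_limit_exists Xi th Kg Hth HKg Hdef) as [I HI].
  destruct (block_count_exists (2 * PI * lam)) as [M [HM1 [HMa HMb]]]; [nra|].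
  exists I. split; [exact HI|].
  apply (sewing_limit_Rabs_le Xi I _ (INR M * Kg) HI);
    [apply Rmult_le_pos; [apply pos_INR | exact HKg]|].
  intros d l Hd Hch Hmesh. apply chain_sum_le_blocks; assumption.
Qed.

End Germ.

Theorem proposition3p8 :
  forall kappa : R, 0 < kappa < 1/2 ->
  exists C : R -> R,
  forall f : R -> R, is_C1 f -> is_finite (triple_norm f) ->
  forall lambda : R, 1 <= lambda ->
  forall (X : R -> R) (XX : R -> R -> R), rough_path X XX ->
  forall Y Y' : R -> R,
    periodic Y -> periodic Y' ->
    (forall x, continuous Y x) -> (forall x, continuous Y' x) ->
    is_finite (holder (1/2 - kappa) X) ->
    is_finite (holder2 (1 - 2 * kappa) XX) ->
    is_finite (holder (1/2 - kappa) Y) ->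
    is_finite (Cnorm (3 * kappa) Y') ->
    is_finite (holder2 (1/2 + 2 * kappa) (remainder X Y Y')) ->
  exists I : R,
    is_rough_integral X XX (fun x => f (lambda * x) * Y x)
                           (fun x => f (lambda * x) * Y' x) I /\
    Rabs I <= C (real (triple_norm f)) *
      (Rpower lambda (kappa - 1/2) * Rabs (Y 0) * real (holder (1/2 - kappa) X)
       + Rpower lambda (2 * kappa - 1) * Kkappa kappa X XX Y Y').
Proof.
  intros kappa Hk. exists (fun T => (sewing_const (sewing_exponent kappa) + 1) * T).
  intros f Hf Hfin lam Hlam X XX Hrp Y Y' _ _ _ _ HfX HfXX HfY HfY' HfR.
  destruct (Cnorm_finite_split (3 * kappa) Y' HfY') as [HfY1 [HfN HC]].
  assert (HcX : continuous X (2 * PI)) by apply Hrp.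
  destruct (germ_integral_bound kappa lam f X Y Y' XX
    (real (holder (1/2 - kappa) X)) (real (holder2 (1 - 2 * kappa) XX))
    (real (holder2 (1/2 + 2 * kappa) (remainder X Y Y'))) (real (holder (1/2 - kappa) Y))
    (real (holder (3 * kappa) Y')) (real (supnorm Y')) (real (triple_norm f)))
    as [I [HI Hbound]];
    auto using holder_nonneg, holder2_nonneg, holder_le, holder2_le, holder_le_from_0,
      supnorm_le, triple_norm_ge.
  - intros x y Hx Hy. apply holder_le_closed; auto; lra.
  - exists I. split; [exact HI|]. unfold Kkappa. rewrite HC. exact Hbound.
Qed.
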